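(* Let $j$ be a fixed positive integer and let $g:[0,\infty)^j\to[0,\infty)$ be a nonnegative function that is Riemann integrable on every bounded box. Suppose there are constants $C,d\ge 0$ such that $g(x_1,\dots,x_j)\le C(x_1+\cdots+x_j)^d$ for all $x_1,\dots,x_j\ge 0$. Then \[ \mathbf E\left[g\left(\frac{X_1}{\mu},\dots,\frac{X_j}{\mu}\right)\right]=\int_0^\infty\!\!\cdots\int_0^\infty g(x_1,\dots,x_j)e^{-x_1-\cdots-x_j}\,dx_1\cdots dx_j+o(1). \] Moreover, the same holds with $(X_1,\dots,X_j)$ replaced by $(X_{\sigma(1)},\dots,X_{\sigma(j)})$ for any distinct indices $\sigma(1),\dots,\sigma(j)\in\{1,\dots,m\}$, with the $o(1)$ term independent of $\sigma$.
   Context: Let $N$ be a positive integer and $\omega=\omega(N)$ a function with $\omega(N)\to\infty$. For integers $m$ with $\omega<m<N/\omega$, let $\Omega$ be the set of all sequences $(X_1,\dots,X_m)$ of positive integers with $X_1+\cdots+X_m=N$, equipped with the uniform distribution, and write $\mu=N/m$. All asymptotic notation ($o(1)$, $O(\cdot)$, a.a.s.) refers to $N\to\infty$, uniformly over all $m$ with $\omega<m<N/\omega$. *)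

From Stdlib Require Import Reals List Arith.
Import ListNotations.
Open Scope R_scope.

Definition rsum (lo len : nat) (F : nat -> R) : R :=
  fold_right Rplus 0 (map F (seq lo len)).

(* comp_sum m N F = sum of F X over all sequences X = (X_1,...,X_m) of
   positive integers with X_1 + ... + X_m = N (X represented as a list). *)
Fixpoint comp_sum (m N : nat) (F : list nat -> R) : R :=
  match m with
  | O => if Nat.eqb N 0 then F nil else 0
  | S m' => rsum 1 N (fun k => comp_sum m' (N - k) (fun l => F (k :: l)))
  end.

(* expectation of F(X) under the uniform distribution on Omega(m,N) *)
Definition comp_expect (m N : nat) (F : list nat -> R) : R :=
  comp_sum m N F / comp_sum m N (fun _ => 1).

Definition rpow (x d : R) : R :=
  if Req_EM_T x 0 then (if Req_EM_T d 0 then 1 else 0) else Rpower x d.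

(* points of R^j are lists of length j *)

Fixpoint msum (n j : nat) (F : list nat -> R) : R :=
  match j with
  | O => F nil
  | S j' => rsum 0 n (fun k => msum n j' (fun l => F (k :: l)))
  end.

(* t is a tag choice for the uniform grid with n^j cells of the box
   prod_{i<j} [a i, b i] *)
Definition is_tag (j n : nat) (a b : nat -> R) (t : list nat -> list R) : Prop :=
  forall k : list nat, length k = j -> (forall i, (i < j)%nat -> (nth i k 0 < n)%nat) ->
    length (t k) = j /\
    forall i, (i < j)%nat ->
      a i + INR (nth i k 0%nat) * ((b i - a i) / INR n) <= nth i (t k) 0 /\
      nth i (t k) 0 <= a i + INR (S (nth i k 0%nat)) * ((b i - a i) / INR n).

Definition cell_vol (j n : nat) (a b : nat -> R) : R :=
  fold_right Rmult 1 (map (fun i => (b i - a i) / INR n) (seq 0 j)).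

(* f is Riemann integrable on the box prod_{i<j} [a i, b i] with integral I:
   Riemann sums over uniform grids with arbitrary tags converge to I. *)
Definition box_integral (j : nat) (f : list R -> R) (a b : nat -> R) (I : R) : Prop :=
  forall eps, 0 < eps -> exists N0 : nat, forall n : nat, (N0 <= n)%nat -> (0 < n)%nat ->
    forall t, is_tag j n a b t ->
      Rabs (msum n j (fun k => f (t k)) * cell_vol j n a b - I) < eps.

(* improper integral over [0,oo)^j as the limit of integrals over [0,R]^j *)
Definition improper_integral (j : nat) (f : list R -> R) (L : R) : Prop :=
  forall eps, 0 < eps -> exists R0, forall Rr, R0 <= Rr ->
    exists I, box_integral j f (fun _ => 0) (fun _ => Rr) I /\ Rabs (I - L) < eps.

Definition lsum (x : list R) : R := fold_right Rplus 0 x.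

Definition scaled_point (j : nat) (s : nat -> nat) (mu : R) (X : list nat) : list R :=
  map (fun i => INR (nth (s i) X 0%nat) / mu) (seq 0 j).

From Stdlib Require Import Reals Lra Lia List Arith ZArith Classical ClassicalEpsilon.
Import ListNotations.
Open Scope R_scope.

(* Let X = (X_1, ..., X_m) be uniform among the compositions of N into m positive parts
   and let dl = m / N = 1 / mu.  For distinct indices s_0, ..., s_{j-1} the vector
   k = (X_{s_i})_i has the law
       P(k) = c(N - |k|, m - j) / c(N, m),    c(n, r) = #compositions of n into r parts,
   whatever the indices (comp_sum_marginal).  Elementary recurrences for c(n, r) give
   P(k) = dl^j exp (-|k| dl) (1 + O(eta)) uniformly for |k| dl <= j R (local_upper,
   local_lower) and P(k) <= e^j dl^j exp (-|k| dl / 2) everywhere (local_tail_bound).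
   Hence E g(X_s / mu) equals, up to a factor 1 + O(eta) and an exponentially small tail,
   the lattice sum  Lam(dl, R) = dl^j sum_{k dl in (0,R]^j} g(k dl) exp (-|k| dl)
   (expectation_estimate).

   On the integration side, g e^(-|x|) satisfies Riemann's criterion on every cube
   [0,R]^j (fw_integrable), lattice sums converge to the integral as dl -> 0
   (lattice_sum_converges, via a regrouping of lattice points into the cells of a
   coarse grid, regrouped_sum_close), and the cube integrals increase to a finite limit L
   (improper_integral_exists).  The growth hypothesis g <= C |x|^d only enters through
   g <= M exp (|x| / 8).  The theorem follows by choosing R, then the accuracy eta, then
   a threshold for omega (uniform_approximation); nothing depends on the indices s. *)

Lemma rsum_S lo len F : rsum lo (S len) F = F lo + rsum (S lo) len F.
Proof. reflexivity. Qed.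

Lemma rsum_split lo a b F : rsum lo (a + b) F = rsum lo a F + rsum (lo + a) b F.
Proof.
  revert lo; induction a; intros lo; simpl.
  - rewrite Nat.add_0_r; unfold rsum; simpl; lra.
  - rewrite !rsum_S, IHa. replace (S lo + a)%nat with (lo + S a)%nat by lia. lra.
Qed.

Lemma rsum_last lo len F : rsum lo (S len) F = rsum lo len F + F (lo + len)%nat.
Proof.
  replace (S len) with (len + 1)%nat by lia. rewrite rsum_split.
  unfold rsum at 2; simpl; lra.
Qed.

Lemma rsum_ext lo len F G :
  (forall k, (lo <= k < lo + len)%nat -> F k = G k) -> rsum lo len F = rsum lo len G.
Proof.
  revert lo; induction len; intros lo H; [reflexivity|].
  rewrite !rsum_S, (H lo) by lia. rewrite (IHlen (S lo)); [reflexivity|].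
  intros k Hk; apply H; lia.
Qed.

Lemma rsum_le lo len F G :
  (forall k, (lo <= k < lo + len)%nat -> F k <= G k) -> rsum lo len F <= rsum lo len G.
Proof.
  revert lo; induction len; intros lo H; [unfold rsum; simpl; lra|].
  rewrite !rsum_S. assert (H1 := H lo ltac:(lia)).
  assert (H2 := IHlen (S lo) ltac:(intros k Hk; apply H; lia)). lra.
Qed.

Lemma rsum_plus lo len F G : rsum lo len (fun k => F k + G k) = rsum lo len F + rsum lo len G.
Proof.
  revert lo; induction len; intros lo; [unfold rsum; simpl; lra|].
  rewrite !rsum_S, IHlen; lra.
Qed.

Lemma rsum_scal lo len c F : rsum lo len (fun k => c * F k) = c * rsum lo len F.
Proof.
  revert lo; induction len; intros lo; [unfold rsum; simpl; lra|].
  rewrite !rsum_S, IHlen; lra.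
Qed.

Lemma rsum_minus lo len F G : rsum lo len (fun k => F k - G k) = rsum lo len F - rsum lo len G.
Proof.
  revert lo; induction len; intros lo; [unfold rsum; simpl; lra|].
  rewrite !rsum_S, IHlen; lra.
Qed.

Lemma rsum_const lo len c : rsum lo len (fun _ => c) = INR len * c.
Proof.
  revert lo; induction len; intros lo; [unfold rsum; simpl; lra|].
  rewrite rsum_S, IHlen, S_INR; lra.
Qed.

Lemma rsum_nonneg lo len F :
  (forall k, (lo <= k < lo + len)%nat -> 0 <= F k) -> 0 <= rsum lo len F.
Proof.
  intros H. replace 0 with (rsum lo len (fun _ => 0)) by (rewrite rsum_const; lra).
  apply rsum_le; auto.
Qed.

Lemma rsum_shift lo len F : rsum (S lo) len F = rsum lo len (fun k => F (S k)).
Proof. unfold rsum. rewrite <- seq_shift, map_map. reflexivity. Qed.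

Lemma rsum_abs lo len F : Rabs (rsum lo len F) <= rsum lo len (fun k => Rabs (F k)).
Proof.
  revert lo; induction len; intros lo; [unfold rsum; simpl; rewrite Rabs_R0; lra|].
  rewrite !rsum_S. eapply Rle_trans; [apply Rabs_triang|].
  specialize (IHlen (S lo)); lra.
Qed.

Lemma rsum_comm lo1 len1 lo2 len2 (F : nat -> nat -> R) :
  rsum lo1 len1 (fun x => rsum lo2 len2 (fun y => F x y)) =
  rsum lo2 len2 (fun y => rsum lo1 len1 (fun x => F x y)).
Proof.
  revert lo1; induction len1; intros lo1.
  - rewrite (rsum_ext lo2 len2 _ (fun _ => 0)) by reflexivity.
    rewrite rsum_const; unfold rsum; simpl; lra.
  - rewrite rsum_S, IHlen1, <- rsum_plus. apply rsum_ext; intros.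
    rewrite rsum_S; reflexivity.
Qed.

Lemma rsum_single lo len F p :
  (lo <= p < lo + len)%nat -> (forall k, (lo <= k < lo + len)%nat -> k <> p -> F k = 0) ->
  rsum lo len F = F p.
Proof.
  revert lo; induction len; intros lo Hp H; [lia|].
  rewrite rsum_S. destruct (Nat.eq_dec lo p).
  - subst. rewrite (rsum_ext _ _ _ (fun _ => 0)), rsum_const; [lra|].
    intros; apply H; lia.
  - rewrite (H lo), (IHlen (S lo)) by (lia || (intros; apply H; lia)). lra.
Qed.

Fixpoint bsum (a n j : nat) (F : list nat -> R) : R :=
  match j with
  | O => F nil
  | S j' => rsum a n (fun k => bsum a n j' (fun l => F (k :: l)))
  end.

Definition inbox (a n j : nat) (k : list nat) : Prop :=
  length k = j /\ Forall (fun x => (a <= x < a + n)%nat) k.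

Lemma msum_bsum n j F : msum n j F = bsum 0 n j F.
Proof.
  revert F; induction j; intros F; simpl; [reflexivity|].
  apply rsum_ext; intros; apply IHj.
Qed.

Lemma inbox_cons a n j x l :
  inbox a n (S j) (x :: l) <-> (a <= x < a + n)%nat /\ inbox a n j l.
Proof.
  unfold inbox; simpl; split.
  - intros [H1 H2]. inversion H2; subst. repeat split; auto; lia.
  - intros [H1 [H2 H3]]. split; [lia|constructor; auto].
Qed.

Lemma bsum_ext a n j F G :
  (forall k, inbox a n j k -> F k = G k) -> bsum a n j F = bsum a n j G.
Proof.
  revert F G; induction j; intros F G H; simpl.
  - apply H. split; auto.
  - apply rsum_ext; intros x Hx. apply IHj. intros l Hl. apply H, inbox_cons; auto.
Qed.

Lemma bsum_le a n j F G :
  (forall k, inbox a n j k -> F k <= G k) -> bsum a n j F <= bsum a n j G.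
Proof.
  revert F G; induction j; intros F G H; simpl.
  - apply H. split; auto.
  - apply rsum_le; intros x Hx. apply IHj. intros l Hl. apply H, inbox_cons; auto.
Qed.

Lemma bsum_plus a n j F G : bsum a n j (fun k => F k + G k) = bsum a n j F + bsum a n j G.
Proof.
  revert F G; induction j; intros F G; simpl; [reflexivity|].
  rewrite <- rsum_plus. apply rsum_ext; intros; apply IHj.
Qed.

Lemma bsum_scal a n j c F : bsum a n j (fun k => c * F k) = c * bsum a n j F.
Proof.
  revert F; induction j; intros F; simpl; [reflexivity|].
  rewrite <- rsum_scal. apply rsum_ext; intros; apply IHj.
Qed.

Lemma bsum_minus a n j F G : bsum a n j (fun k => F k - G k) = bsum a n j F - bsum a n j G.
Proof.
  revert F G; induction j; intros F G; simpl; [reflexivity|].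
  rewrite <- rsum_minus. apply rsum_ext; intros; apply IHj.
Qed.

Lemma bsum_const a n j c : bsum a n j (fun _ => c) = INR n ^ j * c.
Proof.
  induction j; simpl; [lra|].
  rewrite (rsum_ext _ _ _ (fun _ => INR n ^ j * c)) by (intros; apply IHj).
  rewrite rsum_const; lra.
Qed.

Lemma bsum_nonneg a n j F : (forall k, inbox a n j k -> 0 <= F k) -> 0 <= bsum a n j F.
Proof.
  intros H. replace 0 with (bsum a n j (fun _ => 0)) by (rewrite bsum_const; lra).
  apply bsum_le; auto.
Qed.

Lemma bsum_abs a n j F : Rabs (bsum a n j F) <= bsum a n j (fun k => Rabs (F k)).
Proof.
  revert F; induction j; intros F; simpl; [lra|].
  eapply Rle_trans; [apply rsum_abs|]. apply rsum_le; intros; apply IHj.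
Qed.

Lemma bsum_rsum a n j lo len (G : nat -> list nat -> R) :
  rsum lo len (fun x => bsum a n j (G x)) = bsum a n j (fun k => rsum lo len (fun x => G x k)).
Proof.
  revert G; induction j; intros G; simpl; [reflexivity|].
  rewrite rsum_comm. apply rsum_ext; intros. apply IHj.
Qed.

Definition lprod (l : list R) : R := fold_right Rmult 1 l.

Lemma bsum_prod a n j (phi : nat -> R) :
  bsum a n j (fun k => lprod (map phi k)) = (rsum a n phi) ^ j.
Proof.
  induction j; simpl; [reflexivity|].
  rewrite (rsum_ext _ _ _ (fun x => phi x * bsum a n j (fun l => lprod (map phi l)))).
  - rewrite IHj, (rsum_ext _ _ _ (fun x => (rsum a n phi ^ j) * phi x)) by (intros; lra).
    rewrite rsum_scal; lra.
  - intros; simpl. rewrite <- bsum_scal. reflexivity.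
Qed.

Lemma bsum_mono_n a n1 n2 j F :
  (n1 <= n2)%nat -> (forall k, inbox a n2 j k -> 0 <= F k) -> bsum a n1 j F <= bsum a n2 j F.
Proof.
  revert F; induction j; intros F Hn H; simpl; [lra|].
  replace n2 with (n1 + (n2 - n1))%nat at 1 by lia. rewrite rsum_split.
  assert (0 <= rsum (a + n1) (n2 - n1) (fun k => bsum a n2 j (fun l => F (k :: l)))).
  { apply rsum_nonneg; intros. apply bsum_nonneg; intros. apply H, inbox_cons; split; auto; lia. }
  assert (rsum a n1 (fun k => bsum a n1 j (fun l => F (k :: l))) <=
          rsum a n1 (fun k => bsum a n2 j (fun l => F (k :: l)))).
  { apply rsum_le; intros. apply IHj; auto. intros; apply H, inbox_cons; split; auto; lia. }
  lra.
Qed.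

Definition innerb (K : nat) (k : list nat) : bool := forallb (fun x => Nat.leb x K) k.

Lemma bsum_inner n K j F : (K <= n)%nat ->
  bsum 1 n j (fun k => if innerb K k then F k else 0) = bsum 1 K j F.
Proof.
  revert F; induction j; intros F HK; simpl; [reflexivity|].
  replace n with (K + (n - K))%nat at 1 by lia. rewrite rsum_split.
  rewrite (rsum_ext (1 + K) _ _ (fun _ => 0)).
  - rewrite rsum_const, Rmult_0_r, Rplus_0_r. apply rsum_ext; intros x Hx.
    rewrite <- IHj by auto. apply bsum_ext; intros l _. simpl.
    replace (Nat.leb x K) with true by (symmetry; apply Nat.leb_le; lia). reflexivity.
  - intros x Hx. rewrite (bsum_ext _ _ _ _ (fun _ => 0)), bsum_const; [lra|].
    intros l _. simpl. replace (Nat.leb x K) with false by (symmetry; apply Nat.leb_gt; lia).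
    reflexivity.
Qed.

Lemma bsum_shift a n j F : bsum (S a) n j F = bsum a n j (fun k => F (map S k)).
Proof.
  revert F; induction j; intros F; simpl; [reflexivity|].
  rewrite rsum_shift. apply rsum_ext; intros. apply IHj.
Qed.

Lemma Rdiv_le_0_compat a b : 0 <= a -> 0 < b -> 0 <= a / b.
Proof. intros; unfold Rdiv; apply Rmult_le_pos; auto; left; apply Rinv_0_lt_compat; auto. Qed.

Lemma Rabs_le_inv x e : Rabs x <= e -> - e <= x <= e.
Proof. unfold Rabs; destruct (Rcase_abs x); lra. Qed.

Definition ncomp (n r : nat) : R := comp_sum r n (fun _ => 1).

Definition nsum (k : list nat) : nat := fold_right Nat.add 0%nat k.

(* ncomp_rest N r k: the number of ways to complete the parts k into a composition
   of N by r further parts. *)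
Definition ncomp_rest (N r : nat) (k : list nat) : R :=
  if Nat.leb (nsum k) N then ncomp (N - nsum k) r else 0.

Definition coords (s : nat -> nat) (j : nat) (X : list nat) : list nat :=
  map (fun i => nth (s i) X 0%nat) (seq 0 j).

Lemma comp_sum_ext m N F G : (forall l, F l = G l) -> comp_sum m N F = comp_sum m N G.
Proof.
  revert N F G; induction m; intros N F G H; simpl.
  - rewrite H; reflexivity.
  - apply rsum_ext; intros. apply IHm. intros; apply H.
Qed.

Lemma nth_coords s j X p : (p < j)%nat -> nth p (coords s j X) 0%nat = nth (s p) X 0%nat.
Proof.
  intros Hp. unfold coords.
  rewrite (nth_indep _ _ (nth (s 0%nat) X 0%nat)) by (rewrite length_map, length_seq; lia).
  rewrite (map_nth (fun i => nth (s i) X 0%nat)), seq_nth by lia. reflexivity.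
Qed.

Lemma length_coords s j X : length (coords s j X) = j.
Proof. unfold coords; rewrite length_map, length_seq; reflexivity. Qed.

Lemma innerb_false K k : innerb K k = false -> (K < nsum k)%nat.
Proof.
  induction k; simpl; [discriminate|].
  intros H. apply Bool.andb_false_iff in H. destruct H as [H|H].
  - apply Nat.leb_gt in H; lia.
  - specialize (IHk H); lia.
Qed.

(* ncomp_rest M r vanishes outside the cube {1..M}^j, so its cube sums may be taken
   over any larger cube. *)
Lemma bsum_extend N M j r H : (M <= N)%nat ->
  bsum 1 M j (fun k => H k * ncomp_rest M r k) = bsum 1 N j (fun k => H k * ncomp_rest M r k).
Proof.
  intros HM. rewrite <- (bsum_inner N M) by auto. apply bsum_ext; intros k _.
  destruct (innerb M k) eqn:E; [reflexivity|].
  apply innerb_false in E. unfold ncomp_rest.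
  replace (Nat.leb (nsum k) M) with false by (symmetry; apply Nat.leb_gt; lia). lra.
Qed.

(* Summing over the size x of a new first part adds one part. *)
Lemma ncomp_rest_first_part N r k :
  rsum 1 N (fun x => ncomp_rest (N - x) r k) = ncomp_rest N (S r) k.
Proof.
  unfold ncomp_rest. destruct (Nat.leb (nsum k) N) eqn:E.
  - apply Nat.leb_le in E. unfold ncomp at 2. simpl comp_sum.
    replace N with ((N - nsum k) + nsum k)%nat at 1 by lia. rewrite rsum_split.
    rewrite (rsum_ext (1 + (N - nsum k)) _ _ (fun _ => 0)).
    + rewrite rsum_const, Rmult_0_r, Rplus_0_r. apply rsum_ext; intros x Hx.
      replace (Nat.leb (nsum k) (N - x)) with true by (symmetry; apply Nat.leb_le; lia).
      unfold ncomp. f_equal. lia.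
    + intros x Hx.
      replace (Nat.leb (nsum k) (N - x)) with false by (symmetry; apply Nat.leb_gt; lia).
      reflexivity.
  - apply Nat.leb_gt in E. rewrite (rsum_ext _ _ _ (fun _ => 0)), rsum_const; [lra|].
    intros x Hx.
    replace (Nat.leb (nsum k) (N - x)) with false by (symmetry; apply Nat.leb_gt; lia).
    reflexivity.
Qed.

Fixpoint ins (i : nat) (x : nat) (l : list nat) : list nat :=
  match i, l with
  | O, _ => x :: l
  | S i', y :: l' => y :: ins i' x l'
  | S _, nil => [x]
  end.

Lemma length_ins i x l : (i <= length l)%nat -> length (ins i x l) = S (length l).
Proof.
  revert l; induction i; intros l Hi; simpl; [reflexivity|].
  destruct l; simpl in *; [lia|]. rewrite IHi; auto; lia.
Qed.

Lemma nth_ins i x l p : (i <= length l)%nat ->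
  nth p (ins i x l) 0%nat =
  if Nat.ltb p i then nth p l 0%nat else if Nat.eqb p i then x else nth (p - 1) l 0%nat.
Proof.
  revert l p; induction i; intros l p Hi.
  - simpl. destruct p; simpl; [reflexivity|]. rewrite Nat.sub_0_r; reflexivity.
  - destruct l as [|y l]; simpl in Hi; [lia|]. simpl.
    destruct p; [reflexivity|]. rewrite IHi by lia.
    replace (S p <? S i) with (p <? i) by reflexivity.
    replace (S p =? S i) with (p =? i) by reflexivity. replace (S p - 1)%nat with p by lia.
    destruct (p <? i) eqn:E1; [reflexivity|]. destruct (p =? i) eqn:E3; [reflexivity|].
    apply Nat.eqb_neq in E3. apply Nat.ltb_ge in E1.
    destruct p; [lia|]. simpl. rewrite Nat.sub_0_r. reflexivity.
Qed.

Lemma nsum_ins i x l : nsum (ins i x l) = (x + nsum l)%nat.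
Proof.
  revert l; induction i; intros l; simpl; [reflexivity|].
  destruct l; simpl; [lia|]. rewrite IHi; lia.
Qed.

Lemma ins_sum a n i j H : (i <= j)%nat ->
  rsum a n (fun x => bsum a n j (fun k => H (ins i x k))) = bsum a n (S j) H.
Proof.
  revert j H; induction i; intros j H Hi; [reflexivity|].
  destruct j as [|j]; [lia|].
  transitivity (rsum a n (fun y => rsum a n (fun x => bsum a n j (fun k => H (y :: ins i x k))))).
  - simpl bsum. rewrite rsum_comm. reflexivity.
  - change (bsum a n (S (S j)) H) with
      (rsum a n (fun y => bsum a n (S j) (fun l => H (y :: l)))).
    apply rsum_ext; intros y _. apply (IHi j (fun l => H (y :: l))); lia.
Qed.

Definition valid_indices (m j : nat) (s : nat -> nat) : Prop :=
  (forall i, (i < j)%nat -> (s i < m)%nat) /\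
  (forall i i', (i < j)%nat -> (i' < j)%nat -> s i = s i' -> i = i').

Lemma valid_indices_le m j s : valid_indices m j s -> (j <= m)%nat.
Proof.
  intros [H1 H2].
  assert (length (map s (seq 0 j)) <= length (seq 0 m))%nat.
  { apply NoDup_incl_length.
    - apply NoDup_map_NoDup_ForallPairs; [|apply seq_NoDup].
      intros a b Ha Hb. apply in_seq in Ha, Hb. apply H2; lia.
    - intros y Hy. apply in_map_iff in Hy. destruct Hy as [x [<- Hx]].
      apply in_seq in Hx. apply in_seq. specialize (H1 x); lia. }
  rewrite length_map, !length_seq in H; exact H.
Qed.

Lemma coords_cons_miss m j s x l : valid_indices (S m) j s ->
  (forall i, (i < j)%nat -> s i <> 0%nat) ->
  valid_indices m j (fun i => s i - 1)%nat /\
  coords s j (x :: l) = coords (fun i => s i - 1)%nat j l.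
Proof.
  intros [Hs Hinj] Hnz. split; [split|].
  - intros i Hi. specialize (Hs i Hi). specialize (Hnz i Hi). lia.
  - intros i i' Hi Hi' E. apply Hinj; auto. pose proof (Hnz i Hi); pose proof (Hnz i' Hi'); lia.
  - unfold coords. apply map_ext_in. intros i Hi. apply in_seq in Hi.
    specialize (Hnz i ltac:(lia)). destruct (s i); [lia|]. simpl.
    rewrite Nat.sub_0_r; reflexivity.
Qed.

Definition skip (i0 i : nat) : nat := if Nat.ltb i i0 then i else S i.

Lemma coords_cons_hit m j s i0 x l : valid_indices (S m) (S j) s ->
  (i0 < S j)%nat -> s i0 = 0%nat ->
  valid_indices m j (fun i => s (skip i0 i) - 1)%nat /\
  coords s (S j) (x :: l) = ins i0 x (coords (fun i => s (skip i0 i) - 1)%nat j l).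
Proof.
  intros [Hs Hinj] Hi0 Hs0.
  assert (Hsk : forall i, (i < j)%nat -> (skip i0 i < S j)%nat /\ skip i0 i <> i0).
  { intros i Hi; unfold skip. destruct (Nat.ltb i i0) eqn:E;
      [apply Nat.ltb_lt in E|apply Nat.ltb_ge in E]; lia. }
  assert (Hnz : forall p, (p < S j)%nat -> p <> i0 -> s p <> 0%nat).
  { intros p Hp Hne Hc. apply Hne, Hinj; auto; congruence. }
  split; [split|].
  - intros i Hi. destruct (Hsk i Hi) as [H1 H2].
    specialize (Hs _ H1). specialize (Hnz _ H1 H2). lia.
  - intros i i' Hi Hi' E.
    destruct (Hsk i Hi) as [H1 H2], (Hsk i' Hi') as [H1' H2'].
    pose proof (Hnz _ H1 H2); pose proof (Hnz _ H1' H2').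
    assert (skip i0 i = skip i0 i') by (apply Hinj; auto; lia).
    unfold skip in *. destruct (Nat.ltb i i0) eqn:E1; destruct (Nat.ltb i' i0) eqn:E2;
      try (apply Nat.ltb_lt in E1 || apply Nat.ltb_ge in E1);
      try (apply Nat.ltb_lt in E2 || apply Nat.ltb_ge in E2); lia.
  - apply nth_ext with (d := 0%nat) (d' := 0%nat).
    + rewrite length_coords, length_ins; rewrite length_coords; lia.
    + intros p Hp. rewrite length_coords in Hp. rewrite nth_coords by auto.
      rewrite nth_ins by (rewrite length_coords; lia).
      destruct (Nat.ltb p i0) eqn:E1; [|destruct (Nat.eqb p i0) eqn:E2].
      * apply Nat.ltb_lt in E1. rewrite nth_coords by lia. unfold skip.
        rewrite (proj2 (Nat.ltb_lt p i0) E1).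
        assert (s p <> 0%nat) by (apply Hnz; lia).
        destruct (s p); [lia|]. simpl. rewrite Nat.sub_0_r. reflexivity.
      * apply Nat.eqb_eq in E2; subst. rewrite Hs0; reflexivity.
      * apply Nat.ltb_ge in E1. apply Nat.eqb_neq in E2. rewrite nth_coords by lia.
        unfold skip. replace (Nat.ltb (p - 1) i0) with false by (symmetry; apply Nat.ltb_ge; lia).
        replace (S (p - 1)) with p by lia.
        assert (s p <> 0%nat) by (apply Hnz; lia).
        destruct (s p); [lia|]. simpl. rewrite Nat.sub_0_r. reflexivity.
Qed.

(* Induction on m, splitting on whether the first part is chosen. *)
Theorem comp_sum_marginal m : forall N j s Phi, valid_indices m j s ->
  comp_sum m N (fun X => Phi (coords s j X)) =
  bsum 1 N j (fun k => Phi k * ncomp_rest N (m - j) k).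
Proof.
  induction m; intros N j s Phi Hv.
  - destruct j; [|destruct Hv as [Hs _]; specialize (Hs 0%nat ltac:(lia)); lia].
    simpl. unfold ncomp_rest, ncomp; simpl. rewrite Nat.sub_0_r.
    change (coords s 0 []) with (@nil nat). destruct (Nat.eqb N 0); lra.
  - simpl comp_sum.
    destruct (classic (exists i0, (i0 < j)%nat /\ s i0 = 0%nat)) as [[i0 [Hi0 Hs0]]|Hno].
    + destruct j as [|j]; [lia|].
      set (s2 := fun i => (s (skip i0 i) - 1)%nat).
      rewrite (rsum_ext _ _ _ (fun x => bsum 1 N j
                 (fun k => Phi (ins i0 x k) * ncomp_rest N (m - j) (ins i0 x k)))).
      * replace (S m - S j)%nat with (m - j)%nat by lia.
        apply (ins_sum 1 N i0 j (fun k => Phi k * ncomp_rest N (m - j) k)); lia.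
      * intros x Hx. destruct (coords_cons_hit m j s i0 x) with (l := @nil nat)
          as [Hv2 _]; auto.
        rewrite (comp_sum_ext _ _ _ (fun l => (fun k => Phi (ins i0 x k)) (coords s2 j l)))
          by (intros l; destruct (coords_cons_hit m j s i0 x l) as [_ ->]; auto).
        rewrite (IHm (N - x)%nat j s2 (fun k => Phi (ins i0 x k)) Hv2), (bsum_extend N (N - x)%nat) by lia.
        apply bsum_ext; intros k _. f_equal. unfold ncomp_rest. rewrite nsum_ins.
        destruct (Nat.leb (nsum k) (N - x)) eqn:E1; destruct (Nat.leb (x + nsum k) N) eqn:E2;
          try (apply Nat.leb_le in E1 || apply Nat.leb_gt in E1);
          try (apply Nat.leb_le in E2 || apply Nat.leb_gt in E2); try lia; try reflexivity.
        f_equal; lia.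
    + assert (Hnz : forall i, (i < j)%nat -> s i <> 0%nat)
        by (intros i Hi Hc; apply Hno; exists i; auto).
      set (s2 := fun i => (s i - 1)%nat).
      destruct (coords_cons_miss m j s 0%nat []) as [Hv2 _]; auto.
      pose proof (valid_indices_le _ _ _ Hv2).
      rewrite (rsum_ext _ _ _ (fun x => bsum 1 N j (fun k => Phi k * ncomp_rest (N - x) (m - j) k))).
      * rewrite bsum_rsum. apply bsum_ext; intros k _.
        rewrite rsum_scal, ncomp_rest_first_part. do 2 f_equal. lia.
      * intros x Hx.
        rewrite (comp_sum_ext _ _ _ (fun l => Phi (coords s2 j l)))
          by (intros l; destruct (coords_cons_miss m j s x l) as [_ ->]; auto).
        rewrite (IHm (N - x)%nat j s2 Phi Hv2). apply bsum_extend; lia.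
Qed.

(* Elementary facts on the numbers ncomp n r = binomial (n-1) (r-1). *)
Lemma comp_sum_nonneg m N F : (forall l, 0 <= F l) -> 0 <= comp_sum m N F.
Proof.
  revert N F; induction m; intros N F H; simpl.
  - destruct (Nat.eqb N 0); [apply H|lra].
  - apply rsum_nonneg; intros; apply IHm; intros; apply H.
Qed.

Lemma ncomp_nonneg n r : 0 <= ncomp n r.
Proof. apply comp_sum_nonneg; intros; lra. Qed.

Lemma ncomp_0_S r : ncomp 0 (S r) = 0.
Proof. reflexivity. Qed.
Lemma ncomp_S_0 n : ncomp (S n) 0 = 0.
Proof. reflexivity. Qed.

Lemma ncomp_S n r : ncomp n (S r) = rsum 1 n (fun x => ncomp (n - x) r).
Proof. reflexivity. Qed.

Lemma ncomp_zero n r : (n < r)%nat -> ncomp n r = 0.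
Proof.
  revert n; induction r; intros n Hn; [lia|].
  rewrite ncomp_S. rewrite (rsum_ext _ _ _ (fun _ => 0)).
  - rewrite rsum_const; lra.
  - intros x Hx. apply IHr; lia.
Qed.

Lemma ncomp_one_part n : ncomp (S n) 1 = 1.
Proof.
  rewrite ncomp_S. rewrite (rsum_single _ _ _ (S n)); [|lia|].
  - rewrite Nat.sub_diag; reflexivity.
  - intros k Hk Hne. destruct (S n - k)%nat eqn:E; [lia|]. reflexivity.
Qed.

(* Pascal's rule: split on whether the first part equals 1. *)
Lemma ncomp_pascal n r : ncomp (S (S n)) (S (S r)) = ncomp (S n) (S r) + ncomp (S n) (S (S r)).
Proof.
  rewrite (ncomp_S (S (S n))). rewrite rsum_S. rewrite rsum_shift.
  rewrite (ncomp_S (S n) (S r)). f_equal.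
Qed.

(* The two ratio identities  n c(n,r) = r c(n+1,r+1)  and
   n c(n,r+1) = (n-r) c(n+1,r+1), first for n >= 1, by induction with Pascal's rule. *)
Lemma ncomp_add_part_S n : forall r, INR (S n) * ncomp (S n) (S r) = INR (S r) * ncomp (S (S n)) (S (S r)).
Proof.
  induction n; intros r.
  - rewrite ncomp_pascal. destruct r.
    + rewrite ncomp_one_part. simpl. rewrite (ncomp_S 1 1). unfold rsum; simpl. rewrite ncomp_0_S. lra.
    + rewrite !(ncomp_zero 1) by lia. lra.
  - destruct r.
    + rewrite ncomp_pascal. rewrite !ncomp_one_part. specialize (IHn 0%nat). rewrite ncomp_one_part in IHn.
      rewrite !S_INR in *. simpl in *. lra.
    + rewrite (ncomp_pascal (S n) (S r)). pose proof (IHn (S r)) as H1. pose proof (IHn r) as H2.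
      pose proof (ncomp_pascal n r) as H3. rewrite H3.
      rewrite !S_INR in *. nra.
Qed.

Lemma ncomp_grow_S n r : INR (S n) * ncomp (S n) (S r) = (INR (S n) - INR r) * ncomp (S (S n)) (S r).
Proof.
  destruct r.
  - rewrite !ncomp_one_part. simpl; lra.
  - pose proof (ncomp_add_part_S n r) as H1. pose proof (ncomp_pascal n r) as H2.
    rewrite !S_INR in *. nra.
Qed.

Lemma ncomp_add_part n r : INR n * ncomp n r = INR r * ncomp (S n) (S r).
Proof.
  destruct n.
  - destruct r; [simpl; lra|]. rewrite (ncomp_zero 1) by lia. simpl; lra.
  - destruct r; [rewrite ncomp_S_0; simpl; lra|]. apply ncomp_add_part_S.
Qed.

Lemma ncomp_grow n r : INR n * ncomp n (S r) = (INR n - INR r) * ncomp (S n) (S r).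
Proof.
  destruct n.
  - destruct r; [simpl; lra|]. rewrite (ncomp_zero 1), ncomp_0_S by lia. simpl; lra.
  - apply ncomp_grow_S.
Qed.

Lemma ncomp_pos n r : (1 <= r <= n)%nat -> 0 < ncomp n r.
Proof.
  revert r; induction n; intros r Hr; [lia|].
  destruct r; [lia|]. destruct r; [rewrite ncomp_one_part; lra|].
  destruct n; [lia|]. rewrite ncomp_pascal. pose proof (ncomp_nonneg (S n) (S (S r))).
  assert (0 < ncomp (S n) (S r)) by (apply IHn; lia). lra.
Qed.

Lemma ncomp_drop_parts N m j : (j < m <= N)%nat -> forall t, (t <= j)%nat ->
  ncomp (N - t) (m - t) <= ncomp N m * (INR m / INR N) ^ t /\
  ncomp N m * ((INR m - INR j) / INR N) ^ t <= ncomp (N - t) (m - t).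
Proof.
  intros Hm t. induction t; intros Ht.
  - rewrite !Nat.sub_0_r. simpl. lra.
  - destruct (IHt ltac:(lia)) as [IH1 IH2].
    assert (Hrel := ncomp_add_part (N - t - 1) (m - t - 1)).
    replace (S (N - t - 1)) with (N - t)%nat in Hrel by lia.
    replace (S (m - t - 1)) with (m - t)%nat in Hrel by lia.
    replace (N - S t)%nat with (N - t - 1)%nat by lia.
    replace (m - S t)%nat with (m - t - 1)%nat by lia.
    assert (HN : 0 < INR (N - t - 1)) by (apply lt_0_INR; lia).
    assert (Hc : ncomp (N - t - 1) (m - t - 1) = ncomp (N - t) (m - t) * (INR (m - t - 1) / INR (N - t - 1))).
    { field_simplify_eq; [|lra]. lra. }
    rewrite Hc. rewrite !minus_INR in * by lia.
    assert (HN0 : 0 < INR N) by (apply lt_0_INR; lia).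
    assert (Hjm : INR j < INR m) by (apply lt_INR; lia).
    assert (Hmn : INR m <= INR N) by (apply le_INR; lia).
    assert (Htj : INR t + 1 <= INR j) by (rewrite <- S_INR; apply le_INR; lia).
    assert (Hcnn := ncomp_nonneg (N - t) (m - t)). assert (HcN := ncomp_nonneg N m).
    assert (Hq1 : (INR m - INR t - INR 1) / (INR N - INR t - INR 1) <= INR m / INR N).
    { apply Rmult_le_reg_r with (INR N * (INR N - INR t - INR 1)); [simpl; nra|].
      field_simplify; [|simpl; lra|simpl; lra]. simpl. pose proof (pos_INR t). nra. }
    assert (Hq2 : (INR m - INR j) / INR N <= (INR m - INR t - INR 1) / (INR N - INR t - INR 1)).
    { apply Rmult_le_reg_r with (INR N * (INR N - INR t - INR 1)); [simpl; nra|].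
      field_simplify; [|simpl; lra|simpl; lra]. simpl. pose proof (pos_INR t). pose proof (pos_INR j). nra. }
    assert (Hq0 : 0 <= (INR m - INR j) / INR N) by (apply Rdiv_le_0_compat; lra).
    simpl pow. split.
    + assert (0 <= (INR m - INR t - INR 1) / (INR N - INR t - INR 1)) by lra.
      assert (0 <= INR m / INR N) by (apply Rdiv_le_0_compat; [apply pos_INR|lra]).
      assert (0 <= (INR m / INR N) ^ t) by (apply pow_le; lra).
      replace (ncomp N m * (INR m / INR N * (INR m / INR N) ^ t)) with
        ((ncomp N m * (INR m / INR N) ^ t) * (INR m / INR N)) by ring.
      apply Rmult_le_compat; auto.
    + assert (0 <= ((INR m - INR j) / INR N) ^ t) by (apply pow_le; lra).
      replace (ncomp N m * ((INR m - INR j) / INR N * ((INR m - INR j) / INR N) ^ t)) with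
        ((ncomp N m * ((INR m - INR j) / INR N) ^ t) * ((INR m - INR j) / INR N)) by ring.
      apply Rmult_le_compat; auto. apply Rmult_le_pos; auto.
Qed.

Lemma ncomp_shrink_step n r : (1 <= r)%nat -> (2 <= n)%nat ->
  INR (n - 1) * ncomp (n - 1) r = (INR n - INR r) * ncomp n r.
Proof.
  intros Hr Hn. destruct r as [|r]; [lia|].
  pose proof (ncomp_grow (n - 1) r) as H. replace (S (n - 1)) with n in H by lia.
  rewrite H. rewrite minus_INR by lia. rewrite (S_INR r). simpl INR. ring.
Qed.

Lemma ncomp_shrink_upper n0 r : (1 <= r)%nat -> (1 <= n0)%nat -> forall u, (u <= n0)%nat ->
  ncomp (n0 - u) r <= ncomp n0 r * (1 - INR (r - 1) / INR n0) ^ u.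
Proof.
  intros Hr Hn0 u Hu.
  destruct (le_lt_dec r n0) as [Hrn|Hrn].
  2:{ rewrite !ncomp_zero by lia. lra. }
  assert (HN0 : 0 < INR n0) by (apply lt_0_INR; lia).
  set (b := INR (r - 1) / INR n0).
  assert (Hb1 : b <= 1).
  { unfold b. assert (INR (r - 1) <= INR n0) by (apply le_INR; lia).
    apply Rmult_le_reg_r with (INR n0); auto. field_simplify; lra. }
  assert (Hb0 : 0 <= b) by (unfold b; apply Rdiv_le_0_compat; [apply pos_INR|auto]).
  induction u.
  - rewrite Nat.sub_0_r; simpl; lra.
  - assert (IH := IHu ltac:(lia)).
    set (X := ncomp n0 r * (1 - b) ^ u) in *.
    assert (HX : 0 <= X) by (unfold X; apply Rmult_le_pos; [apply ncomp_nonneg|apply pow_le; lra]).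
    simpl pow. replace (ncomp n0 r * ((1 - b) * (1 - b) ^ u)) with (X * (1 - b)) by (unfold X; ring).
    set (n := (n0 - u)%nat) in *.
    replace (n0 - S u)%nat with (n - 1)%nat by (unfold n; lia).
    destruct (le_lt_dec n 1) as [Hn1|Hn1].
    + rewrite ncomp_zero by lia. nra.
    + destruct (le_lt_dec r n) as [Hrn'|Hrn'].
      2:{ rewrite ncomp_zero by lia. nra. }
      assert (Hst := ncomp_shrink_step n r Hr ltac:(lia)).
      assert (Hn1' : 0 < INR (n - 1)) by (apply lt_0_INR; lia).
      assert (Hkey : INR n - INR r <= INR (n - 1) * (1 - b)).
      { unfold b. rewrite !minus_INR by lia.
        assert (INR n <= INR n0) by (apply le_INR; unfold n; lia).
        assert (1 <= INR r) by (replace 1 with (INR 1) by reflexivity; apply le_INR; lia).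
        apply Rmult_le_reg_r with (INR n0); auto. field_simplify; [|lra]. simpl. nra. }
      assert (0 <= ncomp n r) by apply ncomp_nonneg.
      apply Rmult_le_reg_l with (INR (n - 1)); auto. rewrite Hst.
      assert (0 <= INR n - INR r) by (rewrite <- minus_INR by lia; apply pos_INR).
      apply Rle_trans with ((INR n - INR r) * X); [apply Rmult_le_compat_l; auto|].
      replace (INR (n - 1) * (X * (1 - b))) with ((INR (n - 1) * (1 - b)) * X) by ring.
      apply Rmult_le_compat_r; auto.
Qed.

Lemma ncomp_shrink_lower n0 r U : (1 <= r)%nat -> (r + 1 <= n0 - U)%nat -> forall u, (u <= U)%nat ->
  ncomp n0 r * (1 - INR (r - 1) / INR (n0 - U)) ^ u <= ncomp (n0 - u) r.
Proof.
  intros Hr HU u Hu.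
  assert (HN0 : 0 < INR (n0 - U)) by (apply lt_0_INR; lia).
  set (a := INR (r - 1) / INR (n0 - U)).
  assert (Ha1 : a <= 1).
  { unfold a. assert (INR (r - 1) <= INR (n0 - U)) by (apply le_INR; lia).
    apply Rmult_le_reg_r with (INR (n0 - U)); auto. field_simplify; lra. }
  induction u.
  - rewrite Nat.sub_0_r; simpl; lra.
  - assert (IH := IHu ltac:(lia)).
    set (X := ncomp n0 r * (1 - a) ^ u) in *.
    assert (HX : 0 <= X) by (unfold X; apply Rmult_le_pos; [apply ncomp_nonneg|apply pow_le; lra]).
    simpl pow. replace (ncomp n0 r * ((1 - a) * (1 - a) ^ u)) with (X * (1 - a)) by (unfold X; ring).
    set (n := (n0 - u)%nat) in *.
    replace (n0 - S u)%nat with (n - 1)%nat by (unfold n; lia).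
    assert (Hst := ncomp_shrink_step n r Hr ltac:(unfold n; lia)).
    assert (Hn1' : 0 < INR (n - 1)) by (apply lt_0_INR; unfold n; lia).
    assert (Hkey : INR (n - 1) * (1 - a) <= INR n - INR r).
    { assert (H1 : INR (n0 - U) <= INR (n - 1)) by (apply le_INR; unfold n; lia).
      assert (H2 : 1 <= INR r) by (replace 1 with (INR 1) by reflexivity; apply le_INR; lia).
      assert (H3 : INR (r - 1) = INR r - 1) by (rewrite minus_INR by lia; reflexivity).
      assert (H4 : INR (n - 1) = INR n - 1) by (rewrite minus_INR by (unfold n; lia); reflexivity).
      unfold a. rewrite H3. set (D := INR (n0 - U)) in *. rewrite H4 in *.
      apply Rmult_le_reg_r with D; auto. field_simplify; [|lra]. nra. }
    apply Rmult_le_reg_l with (INR (n - 1)); auto. rewrite Hst.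
    assert (0 <= 1 - a) by lra.
    apply Rle_trans with ((INR n - INR r) * X).
    + replace (INR (n - 1) * (X * (1 - a))) with ((INR (n - 1) * (1 - a)) * X) by ring.
      apply Rmult_le_compat_r; auto.
    + apply Rmult_le_compat_l; auto.
      assert (INR r <= INR n) by (apply le_INR; unfold n; lia). lra.
Qed.

Lemma nsum_inbox_ge a n j k : inbox a n j k -> (a * j <= nsum k)%nat.
Proof.
  revert k; induction j; intros k Hk; [lia|].
  destruct k as [|x k]; [destruct Hk as [Hl _]; discriminate|].
  apply inbox_cons in Hk. destruct Hk as [Hx Hk]. simpl. specialize (IHj k Hk). nia.
Qed.

(* Two-sided bounds on the number of completions of k, obtained by first removing
   j parts and j units and then |k| - j further units. *)
Lemma ncomp_rest_upper N m j k : (j < m <= N)%nat -> inbox 1 N j k ->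
  ncomp_rest N (m - j) k <= ncomp N m * (INR m / INR N) ^ j *
                    (1 - INR (m - j - 1) / INR (N - j)) ^ (nsum k - j).
Proof.
  intros Hm Hk. assert (HK := nsum_inbox_ge _ _ _ _ Hk). rewrite Nat.mul_1_l in HK.
  assert (HNj : 0 < INR (N - j)) by (apply lt_0_INR; lia).
  assert (Hb : 0 <= 1 - INR (m - j - 1) / INR (N - j)).
  { assert (INR (m - j - 1) <= INR (N - j)) by (apply le_INR; lia).
    assert (INR (m - j - 1) / INR (N - j) <= 1).
    { apply Rmult_le_reg_r with (INR (N - j)); auto. field_simplify; lra. }
    lra. }
  assert (HN : 0 < INR N) by (apply lt_0_INR; lia).
  assert (Hq : 0 <= (INR m / INR N) ^ j) by (apply pow_le; apply Rdiv_le_0_compat; [apply pos_INR|auto]).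
  unfold ncomp_rest. destruct (Nat.leb (nsum k) N) eqn:E.
  - apply Nat.leb_le in E.
    pose proof (ncomp_shrink_upper (N - j) (m - j) ltac:(lia) ltac:(lia) (nsum k - j) ltac:(lia)) as H1.
    replace (N - j - (nsum k - j))%nat with (N - nsum k)%nat in H1 by lia.
    destruct (ncomp_drop_parts N m j ltac:(lia) j (le_n j)) as [H2 _].
    eapply Rle_trans; [apply H1|]. apply Rmult_le_compat_r; [apply pow_le; auto|]. exact H2.
  - apply Rmult_le_pos; [apply Rmult_le_pos; auto; apply ncomp_nonneg|apply pow_le; auto].
Qed.

Lemma ncomp_rest_lower N m j k : (j < m)%nat -> inbox 1 N j k -> (nsum k + (m - j) + 1 <= N)%nat ->
  ncomp N m * ((INR m - INR j) / INR N) ^ j *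
    (1 - INR (m - j - 1) / INR (N - nsum k)) ^ (nsum k - j) <= ncomp_rest N (m - j) k.
Proof.
  intros Hm Hk HKN. assert (HK := nsum_inbox_ge _ _ _ _ Hk). rewrite Nat.mul_1_l in HK.
  unfold ncomp_rest. replace (Nat.leb (nsum k) N) with true by (symmetry; apply Nat.leb_le; lia).
  pose proof (ncomp_shrink_lower (N - j) (m - j) (nsum k - j) ltac:(lia) ltac:(lia) (nsum k - j) (le_n _)) as H1.
  replace (N - j - (nsum k - j))%nat with (N - nsum k)%nat in H1 by lia.
  destruct (ncomp_drop_parts N m j ltac:(lia) j (le_n j)) as [_ H2].
  assert (HNK : 0 < INR (N - nsum k)) by (apply lt_0_INR; lia).
  assert (Ha : 0 <= 1 - INR (m - j - 1) / INR (N - nsum k)).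
  { assert (INR (m - j - 1) <= INR (N - nsum k)) by (apply le_INR; lia).
    assert (INR (m - j - 1) / INR (N - nsum k) <= 1).
    { apply Rmult_le_reg_r with (INR (N - nsum k)); auto. field_simplify; lra. }
    lra. }
  eapply Rle_trans; [|apply H1]. apply Rmult_le_compat_r; [apply pow_le; auto|]. exact H2.
Qed.

(* Riemann sums over the cube [0,Rr]^j cut into n^j cells of side Rr/n.  A cell is
   indexed by c in {0..n-1}^j; in_cell says that the point y lies in the closed cell c. *)
Definition in_cell (j n : nat) (Rr : R) (c : list nat) (y : list R) : Prop :=
  length y = j /\ forall i, (i < j)%nat ->
    INR (nth i c 0%nat) * (Rr / INR n) <= nth i y 0 <= INR (S (nth i c 0%nat)) * (Rr / INR n).

Definition grid_tag (j n : nat) (Rr : R) (t : list nat -> list R) : Prop :=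
  is_tag j n (fun _ => 0) (fun _ => Rr) t.

Definition in_cube (j : nat) (Rr : R) (x : list R) : Prop :=
  length x = j /\ forall i, (i < j)%nat -> 0 <= nth i x 0 <= Rr.

Definition riemann_sum (j n : nat) (Rr : R) (f : list R -> R) (t : list nat -> list R) : R :=
  bsum 0 n j (fun k => f (t k)) * (Rr / INR n) ^ j.

Definition oscillation_le (j n : nat) (Rr : R) (f : list R -> R) (eps : R) : Prop :=
  forall t t', grid_tag j n Rr t -> grid_tag j n Rr t' ->
    bsum 0 n j (fun k => Rabs (f (t k) - f (t' k))) * (Rr / INR n) ^ j <= eps.

Lemma inbox0_iff n j c :
  inbox 0 n j c <-> (length c = j /\ forall i, (i < j)%nat -> (nth i c 0 < n)%nat).
Proof.
  unfold inbox. split.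
  - intros [Hl Hf]. split; auto. intros i Hi. rewrite Forall_forall in Hf.
    assert (In (nth i c 0%nat) c) by (apply nth_In; lia). apply Hf in H; lia.
  - intros [Hl Hf]. split; auto. rewrite Forall_forall. intros x Hx.
    apply In_nth with (d := 0%nat) in Hx. destruct Hx as [i [Hi <-]].
    specialize (Hf i ltac:(lia)). lia.
Qed.

Lemma grid_tag_in_cell j n Rr t c : grid_tag j n Rr t -> inbox 0 n j c -> in_cell j n Rr c (t c).
Proof.
  intros Ht Hc. apply inbox0_iff in Hc. destruct Hc as [Hl Hc].
  destruct (Ht c Hl Hc) as [H1 H2]. split; auto. intros i Hi. specialize (H2 i Hi).
  replace (Rr - 0) with Rr in H2 by ring. lra.
Qed.

Lemma in_cell_grid_tag j n Rr t :
  (forall c, inbox 0 n j c -> in_cell j n Rr c (t c)) -> grid_tag j n Rr t.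
Proof.
  intros H k Hl Hk. destruct (H k (proj2 (inbox0_iff n j k) (conj Hl Hk))) as [H1 H2].
  split; auto. intros i Hi. specialize (H2 i Hi). replace (Rr - 0) with Rr by ring. lra.
Qed.

Lemma riemann_sum_spec j n Rr f t :
  msum n j (fun k => f (t k)) * cell_vol j n (fun _ => 0) (fun _ => Rr) = riemann_sum j n Rr f t.
Proof.
  unfold riemann_sum. rewrite msum_bsum. f_equal.
  unfold cell_vol. generalize 0%nat. induction j; intros s; simpl; [reflexivity|].
  rewrite IHj. replace (Rr - 0) with Rr by ring. reflexivity.
Qed.

Lemma in_cell_cube j n Rr c y : (0 < n)%nat -> 0 <= Rr ->
  inbox 0 n j c -> in_cell j n Rr c y -> in_cube j Rr y.
Proof.
  intros Hn HR Hc [Hl Hy]. split; auto. intros i Hi. specialize (Hy i Hi).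
  apply inbox0_iff in Hc. destruct Hc as [_ Hc]. specialize (Hc i Hi).
  assert (Hn' : 0 < INR n) by (apply lt_0_INR; lia).
  assert (0 <= INR (nth i c 0%nat)) by apply pos_INR.
  assert (INR (S (nth i c 0%nat)) <= INR n) by (apply le_INR; lia).
  assert (Rr / INR n * INR n = Rr) by (field; lra).
  assert (0 <= Rr / INR n) by (apply Rdiv_le_0_compat; lra).
  split; nra.
Qed.

Lemma cube_bound_nonneg j Rr f B : 0 <= Rr ->
  (forall x, in_cube j Rr x -> Rabs (f x) <= B) -> 0 <= B.
Proof.
  intros HR Hb. assert (in_cube j Rr (repeat 0 j)).
  { split; [apply repeat_length|]. intros i Hi. rewrite nth_repeat_lt by auto. lra. }
  specialize (Hb _ H). pose proof (Rabs_pos (f (repeat 0 j))). lra.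
Qed.

(* Two tags whose Riemann sums always differ by at most eps have oscillation at most
   eps: compare the tags that pick, cell by cell, the larger and the smaller value. *)
Lemma oscillation_of_sum_gap j n Rr f eps : 0 <= Rr -> (0 < n)%nat ->
  (forall t t', grid_tag j n Rr t -> grid_tag j n Rr t' ->
     Rabs (riemann_sum j n Rr f t - riemann_sum j n Rr f t') <= eps) ->
  oscillation_le j n Rr f eps.
Proof.
  intros HR Hn H t t' Ht Ht'.
  set (u := fun k => if Rle_dec (f (t' k)) (f (t k)) then t k else t' k).
  set (v := fun k => if Rle_dec (f (t' k)) (f (t k)) then t' k else t k).
  assert (Hu : grid_tag j n Rr u).
  { apply in_cell_grid_tag; intros c Hc. unfold u.
    destruct (Rle_dec _ _); apply grid_tag_in_cell; auto. }
  assert (Hv : grid_tag j n Rr v).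
  { apply in_cell_grid_tag; intros c Hc. unfold v.
    destruct (Rle_dec _ _); apply grid_tag_in_cell; auto. }
  specialize (H u v Hu Hv). unfold riemann_sum in H.
  rewrite <- Rmult_minus_distr_r, <- bsum_minus in H.
  rewrite (bsum_ext _ _ _ (fun k => Rabs (f (t k) - f (t' k))) (fun k => f (u k) - f (v k))).
  - eapply Rle_trans; [apply RRle_abs|]. exact H.
  - intros k _. unfold u, v. destruct (Rle_dec _ _).
    + rewrite Rabs_right; lra.
    + rewrite Rabs_left; lra.
Qed.

Lemma riemann_sum_gap j n Rr f eta t t' : 0 <= Rr -> (0 < n)%nat ->
  oscillation_le j n Rr f eta -> grid_tag j n Rr t -> grid_tag j n Rr t' ->
  Rabs (riemann_sum j n Rr f t - riemann_sum j n Rr f t') <= eta.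
Proof.
  intros HR Hn H Ht Ht'. specialize (H t t' Ht Ht'). unfold riemann_sum.
  assert (Hq : 0 <= (Rr / INR n) ^ j)
    by (apply pow_le, Rdiv_le_0_compat; auto; apply lt_0_INR; auto).
  rewrite <- Rmult_minus_distr_r, <- bsum_minus, Rabs_mult, (Rabs_right _ (Rle_ge _ _ Hq)).
  eapply Rle_trans; [|exact H]. apply Rmult_le_compat_r; auto. apply bsum_abs.
Qed.

Fixpoint gsum (rs : list (nat * nat)) (F : list nat -> R) : R :=
  match rs with
  | [] => F []
  | (a, l) :: rs' => rsum a l (fun x => gsum rs' (fun k => F (x :: k)))
  end.

Fixpoint inrng (rs : list (nat * nat)) (k : list nat) : Prop :=
  match rs, k with
  | [], [] => True
  | (a, l) :: rs', x :: k' => (a <= x < a + l)%nat /\ inrng rs' k'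
  | _, _ => False
  end.

Lemma gsum_minus rs F G : gsum rs (fun k => F k - G k) = gsum rs F - gsum rs G.
Proof.
  revert F G; induction rs as [|[a l] rs IH]; intros F G; simpl; [reflexivity|].
  rewrite <- rsum_minus. apply rsum_ext; intros; apply IH.
Qed.

Lemma gsum_le rs F G : (forall k, inrng rs k -> F k <= G k) -> gsum rs F <= gsum rs G.
Proof.
  revert F G; induction rs as [|[a l] rs IH]; intros F G H; simpl.
  - apply H; simpl; auto.
  - apply rsum_le; intros x Hx. apply IH; intros k Hk. apply H; simpl; auto.
Qed.

Lemma gsum_abs rs F : Rabs (gsum rs F) <= gsum rs (fun k => Rabs (F k)).
Proof.
  revert F; induction rs as [|[a l] rs IH]; intros F; simpl; [lra|].
  eapply Rle_trans; [apply rsum_abs|]. apply rsum_le; intros; apply IH.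
Qed.

Definition gcount (rs : list (nat * nat)) : R := lprod (map (fun p => INR (snd p)) rs).

Lemma gsum_const rs c : gsum rs (fun _ => c) = gcount rs * c.
Proof.
  induction rs as [|[a l] rs IH]; simpl; unfold gcount; simpl; [lra|].
  rewrite (rsum_ext _ _ _ (fun _ => gcount rs * c)) by (intros; apply IH).
  rewrite rsum_const. unfold gcount. lra.
Qed.

Lemma gcount_pos rs k : inrng rs k -> 0 < gcount rs.
Proof.
  revert k; induction rs as [|[a l] rs IH]; intros k Hk; unfold gcount; simpl; [lra|].
  destruct k as [|x k]; [simpl in Hk; tauto|]. simpl in Hk. destruct Hk as [H1 H2].
  apply Rmult_lt_0_compat; [apply lt_0_INR; lia|]. apply (IH k H2).
Qed.

Lemma argmax1 a l (F : nat -> R) : (0 < l)%nat ->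
  exists x0, (a <= x0 < a + l)%nat /\ forall x, (a <= x < a + l)%nat -> F x <= F x0.
Proof.
  induction l; intros Hl; [lia|]. destruct l.
  - exists a. split; [lia|]. intros x Hx. replace x with a by lia. lra.
  - destruct (IHl ltac:(lia)) as [x1 [Hx1 H1]].
    destruct (Rle_dec (F (a + S l)%nat) (F x1)).
    + exists x1. split; [lia|]. intros x Hx. destruct (Nat.eq_dec x (a + S l)).
      * subst; auto.
      * apply H1; lia.
    + exists (a + S l)%nat. split; [lia|]. intros x Hx. destruct (Nat.eq_dec x (a + S l)).
      * subst; lra.
      * specialize (H1 x ltac:(lia)). lra.
Qed.

Lemma gsum_argmax rs (psi : list nat -> R) :
  exists k0, (gcount rs = 0 \/ inrng rs k0) /\ forall k, inrng rs k -> psi k <= psi k0.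
Proof.
  revert psi; induction rs as [|[a l] rs IH]; intros psi.
  - exists []. split; [right; simpl; auto|]. intros k Hk. destruct k; [lra|simpl in Hk; tauto].
  - destruct l as [|l].
    + exists []. split; [left; unfold gcount; simpl; lra|].
      intros k Hk. destruct k as [|x k]; simpl in Hk; [tauto|lia].
    + assert (Hc : forall x, {k0 | (gcount rs = 0 \/ inrng rs k0) /\
                     forall k, inrng rs k -> psi (x :: k) <= psi (x :: k0)}).
      { intros x. apply constructive_indefinite_description. apply IH. }
      set (kf := fun x => proj1_sig (Hc x)).
      destruct (argmax1 a (S l) (fun x => psi (x :: kf x)) ltac:(lia)) as [x0 [Hx0 Hmax]].
      exists (x0 :: kf x0). destruct (proj2_sig (Hc x0)) as [H1 H2]. split.
      * destruct H1 as [H1|H1]; [left; unfold gcount in *; simpl; rewrite H1; lra|].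
        right. simpl. split; auto.
      * intros k Hk. destruct k as [|x k]; [simpl in Hk; tauto|]. simpl in Hk.
        destruct Hk as [Hx Hk]. destruct (proj2_sig (Hc x)) as [_ H3].
        specialize (H3 k Hk). specialize (Hmax x Hx). unfold kf in *. lra.
Qed.

(* Regrouping a fine grid into coarse cells: the coarse cell c (of a 1-dimensional
   grid) contains the fine indices lo c, ..., lo (c+1) - 1. *)
Definition rngs (lo : nat -> nat) (c : list nat) : list (nat * nat) :=
  map (fun ci => (lo ci, (lo (S ci) - lo ci)%nat)) c.

Lemma rsum_regroup (lo : nat -> nat) n F : lo 0%nat = 0%nat ->
  (forall c, (c < n)%nat -> (lo c <= lo (S c))%nat) ->
  rsum 0 (lo n) F = rsum 0 n (fun c => rsum (lo c) (lo (S c) - lo c) F).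
Proof.
  intros H0 Hm. induction n.
  - rewrite H0; reflexivity.
  - rewrite rsum_last, <- IHn by (intros; apply Hm; lia).
    replace (lo (S n)) with (lo n + (lo (S n) - lo n))%nat at 1
      by (specialize (Hm n ltac:(lia)); lia).
    rewrite rsum_split. reflexivity.
Qed.

Lemma bsum_regroup (lo : nat -> nat) n j F : lo 0%nat = 0%nat ->
  (forall c, (c < n)%nat -> (lo c <= lo (S c))%nat) ->
  bsum 0 (lo n) j F = bsum 0 n j (fun c => gsum (rngs lo c) F).
Proof.
  intros H0 Hm. revert F; induction j; intros F; simpl; [reflexivity|].
  rewrite (rsum_ext _ _ _ (fun x => bsum 0 n j (fun c => gsum (rngs lo c) (fun l => F (x :: l)))))
    by (intros; apply IHj).
  rewrite rsum_regroup by auto. apply rsum_ext; intros c0 Hc0.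
  rewrite bsum_rsum. reflexivity.
Qed.

Lemma inrng_rngs lo n j c k : inbox 0 n j c -> inrng (rngs lo c) k ->
  (forall c0, (c0 < n)%nat -> (lo c0 <= lo (S c0))%nat) ->
  length k = j /\ forall i, (i < j)%nat ->
    (lo (nth i c 0%nat) <= nth i k 0%nat < lo (S (nth i c 0%nat)))%nat.
Proof.
  intros Hc Hk Hm. revert c k Hc Hk; induction j; intros c k Hc Hk.
  - destruct Hc as [Hl _]. destruct c; [|discriminate]. destruct k; simpl in Hk; [|tauto].
    split; auto; intros; lia.
  - destruct c as [|c0 c]; [destruct Hc as [Hl _]; discriminate|].
    apply inbox_cons in Hc. destruct Hc as [Hc0 Hc].
    destruct k as [|x k]; [simpl in Hk; tauto|]. simpl in Hk. destruct Hk as [Hx Hk].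
    destruct (IHj c k Hc Hk) as [H1 H2]. split; [simpl; auto|].
    intros i Hi. destruct i; simpl.
    + specialize (Hm c0 ltac:(lia)). lia.
    + apply H2; lia.
Qed.

Lemma lprod_approx (l : list R) h e : 0 <= h -> 0 <= e -> Forall (fun a => Rabs (a - h) <= e) l ->
  Rabs (lprod l - h ^ length l) <= (h + e) ^ length l - h ^ length l.
Proof.
  intros Hh He. induction l as [|a l IH]; intros Hf; simpl.
  - unfold lprod; simpl. rewrite Rminus_diag, Rabs_R0. lra.
  - inversion Hf; subst. specialize (IH H2). unfold lprod in *; simpl.
    set (P := fold_right Rmult 1 l) in *. set (q := h ^ length l) in *.
    assert (Hq : 0 <= q) by (apply pow_le; auto).
    assert (Hq2 : q <= (h + e) ^ length l) by (apply pow_incr; lra).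
    replace (a * P - h * q) with (a * (P - q) + (a - h) * q) by ring.
    eapply Rle_trans; [apply Rabs_triang|]. rewrite !Rabs_mult.
    assert (Rabs a <= h + e)
      by (apply Rabs_le_inv in H1; unfold Rabs; destruct (Rcase_abs a); lra).
    rewrite (Rabs_right q) by lra.
    apply Rle_trans with ((h + e) * ((h + e) ^ length l - q) + e * q).
    + apply Rplus_le_compat; apply Rmult_le_compat; auto using Rabs_pos; lra.
    + lra.
Qed.

Lemma coarse_volume_close lo n j c delta h e : 0 <= h -> 0 <= e -> inbox 0 n j c ->
  (forall c0, (c0 < n)%nat -> Rabs (INR (lo (S c0) - lo c0) * delta - h) <= e) ->
  Rabs (gcount (rngs lo c) * delta ^ j - h ^ j) <= (h + e) ^ j - h ^ j.
Proof.
  intros Hh He [Hl Hc] Hcnt.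
  assert (Hg : gcount (rngs lo c) * delta ^ length c =
               lprod (map (fun ci => INR (lo (S ci) - lo ci) * delta) c)).
  { clear. induction c as [|c0 c IH]; unfold gcount, lprod in *; simpl; [lra|].
    rewrite <- IH. ring. }
  rewrite <- Hl, Hg.
  assert (HF : Forall (fun a => Rabs (a - h) <= e)
                 (map (fun ci => INR (lo (S ci) - lo ci) * delta) c)).
  { rewrite Forall_forall. intros a Ha. apply in_map_iff in Ha.
    destruct Ha as [ci [<- Hci]]. rewrite Forall_forall in Hc. apply Hcnt, Hc, Hci. }
  pose proof (lprod_approx _ h e Hh He HF) as HH. rewrite length_map in HH. exact HH.
Qed.

Lemma gsum_vs_value rs (F : list nat -> R) (w H E B D v : R) :
  0 <= w -> 0 <= H -> Rabs (gcount rs * w - H) <= E -> Rabs v <= B -> 0 <= D <= 2 * B ->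
  (forall k, inrng rs k -> Rabs (F k - v) <= D) ->
  Rabs (gsum rs F * w - H * v) <= H * D + 3 * B * E.
Proof.
  intros Hw HH HA Hv HD HF.
  set (A := gcount rs * w) in *.
  assert (Hdec : gsum rs F * w - H * v = w * gsum rs (fun k => F k - v) + (A - H) * v).
  { rewrite gsum_minus, gsum_const. unfold A. ring. }
  assert (Hg : Rabs (gsum rs (fun k => F k - v)) <= gcount rs * D).
  { eapply Rle_trans; [apply gsum_abs|]. rewrite <- gsum_const. apply gsum_le. auto. }
  assert (H1 : w * Rabs (gsum rs (fun k => F k - v)) <= A * D).
  { replace (A * D) with (w * (gcount rs * D)) by (unfold A; ring).
    apply Rmult_le_compat_l; auto. }
  assert (H2 : Rabs (A - H) * Rabs v <= E * B) by (apply Rmult_le_compat; auto using Rabs_pos).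
  assert (H3 : A <= H + E) by (apply Rabs_le_inv in HA; lra).
  assert (HE0 : 0 <= E) by (pose proof (Rabs_pos (A - H)); lra).
  rewrite Hdec. eapply Rle_trans; [apply Rabs_triang|].
  rewrite !Rabs_mult, (Rabs_right w) by lra. nra.
Qed.

Lemma worst_tag j n Rr (lo : nat -> nat) (T : list nat -> list R) (f : list R -> R) t :
  grid_tag j n Rr t ->
  (forall c k, inbox 0 n j c -> inrng (rngs lo c) k -> in_cell j n Rr c (T k)) ->
  exists u, grid_tag j n Rr u /\ forall c, inbox 0 n j c -> forall k, inrng (rngs lo c) k ->
    Rabs (f (T k) - f (t c)) <= Rabs (f (u c) - f (t c)).
Proof.
  intros Ht HT.
  assert (Hu : forall c, exists y, inbox 0 n j c -> in_cell j n Rr c y /\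
             forall k, inrng (rngs lo c) k -> Rabs (f (T k) - f (t c)) <= Rabs (f y - f (t c))).
  { intros c.
    destruct (gsum_argmax (rngs lo c) (fun k => Rabs (f (T k) - f (t c)))) as [k0 [[H1|H1] H2]].
    - exists (t c). intros Hc. split; [apply grid_tag_in_cell; auto|].
      intros k Hk. apply gcount_pos in Hk. lra.
    - exists (T k0). intros Hc. split; auto. }
  exists (fun c => proj1_sig (constructive_indefinite_description _ (Hu c))).
  split.
  - apply in_cell_grid_tag. intros c Hc.
    destruct (constructive_indefinite_description _ (Hu c)) as [y Hy]. apply Hy, Hc.
  - intros c Hc. destruct (constructive_indefinite_description _ (Hu c)) as [y Hy].
    apply Hy, Hc.
Qed.

(* Main comparison lemma: a Riemann-type sum over a finer (non-uniform) grid, whose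
   points are grouped by the coarse cells they lie in, is close to any coarse Riemann
   sum, up to the coarse oscillation and to the error in the cell volumes. *)
Theorem regrouped_sum_close (j n : nat) (Rr delta e B eps : R) (lo : nat -> nat)
  (T : list nat -> list R) (f : list R -> R) (t : list nat -> list R) :
  (0 < n)%nat -> 0 < Rr -> 0 < delta -> 0 <= e ->
  lo 0%nat = 0%nat -> (forall c, (c < n)%nat -> (lo c <= lo (S c))%nat) ->
  (forall c, (c < n)%nat -> Rabs (INR (lo (S c) - lo c) * delta - Rr / INR n) <= e) ->
  (forall c k, inbox 0 n j c -> length k = j ->
     (forall i, (i < j)%nat -> (lo (nth i c 0%nat) <= nth i k 0%nat < lo (S (nth i c 0%nat)))%nat) ->
     in_cell j n Rr c (T k)) ->
  (forall x, in_cube j Rr x -> Rabs (f x) <= B) ->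
  oscillation_le j n Rr f eps -> grid_tag j n Rr t ->
  Rabs (bsum 0 (lo n) j (fun k => f (T k)) * delta ^ j - riemann_sum j n Rr f t) <=
    eps + 3 * B * INR n ^ j * ((Rr / INR n + e) ^ j - (Rr / INR n) ^ j).
Proof.
  intros Hn HR Hd He H0 Hm Hcnt HT Hb Hosc Ht.
  set (h := Rr / INR n) in *.
  assert (Hh : 0 <= h) by (unfold h; apply Rdiv_le_0_compat; [lra|apply lt_0_INR; auto]).
  assert (HB : 0 <= B) by (apply (cube_bound_nonneg j Rr f); auto; lra).
  assert (HT' : forall c k, inbox 0 n j c -> inrng (rngs lo c) k -> in_cell j n Rr c (T k)).
  { intros c k Hc Hk. destruct (inrng_rngs lo n j c k Hc Hk Hm). apply HT; auto. }
  destruct (worst_tag j n Rr lo T f t Ht HT') as [u [Hu Hmax]].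
  specialize (Hosc u t Hu Ht). fold h in Hosc.
  set (E := (h + e) ^ j - h ^ j).
  assert (Hcell : forall c, inbox 0 n j c ->
    Rabs (gsum (rngs lo c) (fun k => f (T k)) * delta ^ j - h ^ j * f (t c)) <=
      h ^ j * Rabs (f (u c) - f (t c)) + 3 * B * E).
  { intros c Hc.
    assert (Hft : Rabs (f (t c)) <= B)
      by (apply Hb, (in_cell_cube j n Rr c); auto; try lra; apply grid_tag_in_cell; auto).
    assert (Hfu : Rabs (f (u c)) <= B)
      by (apply Hb, (in_cell_cube j n Rr c); auto; try lra; apply grid_tag_in_cell; auto).
    apply gsum_vs_value; auto.
    - apply pow_le; lra.
    - apply pow_le; lra.
    - apply coarse_volume_close with n; auto.
    - split; [apply Rabs_pos|]. eapply Rle_trans; [apply Rabs_triang|].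
      rewrite Rabs_Ropp. lra. }
  rewrite bsum_regroup by auto. unfold riemann_sum. fold h.
  rewrite Rmult_comm, <- bsum_scal, (Rmult_comm (bsum 0 n j _)), <- bsum_scal, <- bsum_minus.
  eapply Rle_trans; [apply bsum_abs|].
  eapply Rle_trans.
  { apply bsum_le. intros c Hc. rewrite (Rmult_comm (delta ^ j)). apply (Hcell c Hc). }
  rewrite bsum_plus, bsum_scal, bsum_const.
  rewrite Rmult_comm in Hosc. unfold E. lra.
Qed.

Definition osc_vanishes (j : nat) (Rr : R) (f : list R -> R) : Prop :=
  forall eta, 0 < eta -> exists N1 : nat, forall n, (N1 <= n)%nat -> (0 < n)%nat ->
    oscillation_le j n Rr f eta.

Lemma box_integral_riemann j f Rr I : box_integral j f (fun _ => 0) (fun _ => Rr) I ->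
  forall eps, 0 < eps -> exists N0 : nat, forall n, (N0 <= n)%nat -> (0 < n)%nat ->
    forall t, grid_tag j n Rr t -> Rabs (riemann_sum j n Rr f t - I) < eps.
Proof.
  intros HI eps Heps. destruct (HI eps Heps) as [N0 HN0]. exists N0.
  intros n Hn Hn0 t Ht. rewrite <- riemann_sum_spec. apply HN0; auto.
Qed.

Lemma osc_vanishes_of_integral j Rr f I : 0 <= Rr ->
  box_integral j f (fun _ => 0) (fun _ => Rr) I -> osc_vanishes j Rr f.
Proof.
  intros HR HI eta Heta.
  destruct (box_integral_riemann j f Rr I HI (eta / 2) ltac:(lra)) as [N0 HN0].
  exists N0. intros n Hn Hn0. apply oscillation_of_sum_gap; auto.
  intros t t' Ht Ht'. pose proof (HN0 n Hn Hn0 t Ht). pose proof (HN0 n Hn Hn0 t' Ht').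
  replace (riemann_sum j n Rr f t - riemann_sum j n Rr f t') with
    ((riemann_sum j n Rr f t - I) - (riemann_sum j n Rr f t' - I)) by ring.
  eapply Rle_trans; [apply Rabs_triang|]. rewrite Rabs_Ropp. lra.
Qed.

Definition corner_tag (j n : nat) (Rr : R) (k : list nat) : list R :=
  map (fun i => INR (nth i k 0%nat) * (Rr / INR n)) (seq 0 j).

Lemma nth_map_seq (F : nat -> R) j i : (i < j)%nat -> nth i (map F (seq 0 j)) 0 = F i.
Proof.
  intros Hi. rewrite (nth_indep _ _ (F 0%nat)) by (rewrite length_map, length_seq; lia).
  rewrite map_nth, seq_nth by lia. reflexivity.
Qed.

Lemma corner_tag_spec j n Rr : 0 <= Rr -> (0 < n)%nat -> grid_tag j n Rr (corner_tag j n Rr).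
Proof.
  intros HR Hn. apply in_cell_grid_tag. intros c Hc. split.
  - unfold corner_tag; rewrite length_map, length_seq; auto.
  - intros i Hi. unfold corner_tag. rewrite nth_map_seq, S_INR by auto.
    assert (0 <= Rr / INR n) by (apply Rdiv_le_0_compat; auto; apply lt_0_INR; auto). nra.
Qed.

(* Refining a grid by a factor q moves the Riemann sum by at most the coarse
   oscillation: each fine point lies in some coarse cell. *)
Lemma refinement_close j n q Rr f B eta t t' : (0 < n)%nat -> (0 < q)%nat -> 0 < Rr ->
  (forall x, in_cube j Rr x -> Rabs (f x) <= B) ->
  oscillation_le j n Rr f eta -> grid_tag j n Rr t -> grid_tag j (n * q) Rr t' ->
  Rabs (riemann_sum j (n * q) Rr f t' - riemann_sum j n Rr f t) <= eta.
Proof.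
  intros Hn Hq HR Hb Hosc Ht Ht'.
  assert (Hn' : 0 < INR n) by (apply lt_0_INR; lia).
  assert (Hq' : 0 < INR q) by (apply lt_0_INR; lia).
  assert (Hnq : INR (n * q) = INR n * INR q) by apply mult_INR.
  pose proof (regrouped_sum_close j n Rr (Rr / INR (n * q)) 0 B eta (fun c => (c * q)%nat)
    t' f t Hn HR ltac:(rewrite Hnq; apply Rdiv_lt_0_compat; nra) ltac:(lra) ltac:(reflexivity)
    ltac:(intros; cbv beta; nia)) as G.
  rewrite Rplus_0_r, Rminus_diag, Rmult_0_r, Rplus_0_r in G.
  apply G; auto.
  - intros c Hc. replace (S c * q - c * q)%nat with q by nia. rewrite Hnq.
    replace (INR q * (Rr / (INR n * INR q)) - Rr / INR n) with 0 by (field; lra).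
    rewrite Rabs_R0; lra.
  - intros c k Hc Hl Hk. apply inbox0_iff in Hc. destruct Hc as [_ Hc].
    assert (Hk' : inbox 0 (n * q) j k).
    { apply inbox0_iff. split; auto. intros i Hi. specialize (Hk i Hi). specialize (Hc i Hi).
      simpl in Hk. nia. }
    destruct (grid_tag_in_cell _ _ _ _ _ Ht' Hk') as [H1 H2]. split; auto.
    intros i Hi. specialize (H2 i Hi). specialize (Hk i Hi). destruct Hk as [Hk1 Hk2].
    rewrite Hnq in H2.
    assert (Hr : 0 < Rr / (INR n * INR q)) by (apply Rdiv_lt_0_compat; nra).
    assert (E1 : INR (nth i c 0%nat) * (Rr / INR n) =
                 INR (nth i c 0%nat * q) * (Rr / (INR n * INR q)))
      by (rewrite mult_INR; field; lra).
    assert (E2 : INR (S (nth i c 0%nat)) * (Rr / INR n) =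
                 INR (S (nth i c 0%nat) * q) * (Rr / (INR n * INR q)))
      by (rewrite mult_INR; field; lra).
    assert (INR (nth i c 0%nat * q) <= INR (nth i k 0%nat)) by (apply le_INR; lia).
    assert (INR (S (nth i k 0%nat)) <= INR (S (nth i c 0%nat) * q))
      by (apply le_INR; simpl in Hk2; lia).
    rewrite E1, E2. split; nra.
Qed.

(* Under Riemann's criterion the corner sums on the grids with n+1 cells per side
   form a Cauchy sequence (compare both with their common refinement). *)
Lemma corner_sums_cauchy j Rr f B : 0 < Rr ->
  (forall x, in_cube j Rr x -> Rabs (f x) <= B) -> osc_vanishes j Rr f ->
  Cauchy_crit (fun n => riemann_sum j (S n) Rr f (corner_tag j (S n) Rr)).
Proof.
  intros HR Hb Hosc eps Heps. destruct (Hosc (eps / 3) ltac:(lra)) as [N1 HN1].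
  exists N1. intros n1 n2 H1 H2. unfold Rdist.
  assert (CT : forall n, (0 < n)%nat -> grid_tag j n Rr (corner_tag j n Rr))
    by (intros; apply corner_tag_spec; auto; lra).
  pose proof (refinement_close j (S n1) (S n2) Rr f B (eps / 3) _ _ ltac:(lia) ltac:(lia)
    HR Hb (HN1 (S n1) ltac:(lia) ltac:(lia)) (CT (S n1) ltac:(lia)) (CT (S n1 * S n2)%nat ltac:(lia)))
    as G1.
  pose proof (refinement_close j (S n2) (S n1) Rr f B (eps / 3) _ _ ltac:(lia) ltac:(lia)
    HR Hb (HN1 (S n2) ltac:(lia) ltac:(lia)) (CT (S n2) ltac:(lia)) (CT (S n2 * S n1)%nat ltac:(lia)))
    as G2.
  rewrite Nat.mul_comm in G2.
  set (X := riemann_sum j (S n1 * S n2) Rr f (corner_tag j (S n1 * S n2) Rr)) in *.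
  apply Rabs_le_inv in G1, G2. apply Rabs_def1; lra.
Qed.

(* Riemann's criterion implies integrability; the integral is the limit of the
   corner sums. *)
Lemma integral_of_osc_vanishes j Rr f B : 0 < Rr ->
  (forall x, in_cube j Rr x -> Rabs (f x) <= B) -> osc_vanishes j Rr f ->
  exists I, box_integral j f (fun _ => 0) (fun _ => Rr) I.
Proof.
  intros HR Hb Hosc. assert (HR' : 0 <= Rr) by lra.
  assert (CT : forall n, (0 < n)%nat -> grid_tag j n Rr (corner_tag j n Rr))
    by (intros; apply corner_tag_spec; auto).
  destruct (R_complete _ (corner_sums_cauchy j Rr f B HR Hb Hosc)) as [I HI]. exists I.
  intros eps Heps. destruct (Hosc (eps / 4) ltac:(lra)) as [N1 HN1].
  exists (S N1). intros n Hn Hn0 t Ht. rewrite riemann_sum_spec.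
  destruct (HI (eps / 4) ltac:(lra)) as [N2 HN2].
  set (m := Nat.max N2 (S N1)).
  specialize (HN2 m ltac:(unfold m; lia)). unfold Rdist in HN2.
  pose proof (riemann_sum_gap j n Rr f (eps / 4) t (corner_tag j n Rr) HR' Hn0
    (HN1 n ltac:(lia) Hn0) Ht (CT n Hn0)) as G0.
  pose proof (refinement_close j n (S m) Rr f B (eps / 4) _ _ Hn0 ltac:(lia) HR Hb
     (HN1 n ltac:(lia) Hn0) (CT n Hn0) (CT (n * S m)%nat ltac:(lia))) as G1.
  pose proof (refinement_close j (S m) n Rr f B (eps / 4) _ _ ltac:(lia) Hn0 HR Hb
     (HN1 (S m) ltac:(unfold m; lia) ltac:(lia)) (CT (S m) ltac:(lia))
     (CT (S m * n)%nat ltac:(lia))) as G2.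
  rewrite (Nat.mul_comm (S m) n) in G2.
  apply Rabs_le_inv in G0, G1, G2. apply Rabs_def2 in HN2. apply Rabs_def1; lra.
Qed.

Lemma exp_le x y : x <= y -> exp x <= exp y.
Proof. intros [H|H]; [left; apply exp_increasing; auto|subst; lra]. Qed.

Lemma exp_neg_lipschitz a b : 0 <= a -> 0 <= b -> Rabs (exp (- a) - exp (- b)) <= Rabs (a - b).
Proof.
  assert (K : forall x y, 0 <= x <= y -> exp (- x) - exp (- y) <= y - x).
  { intros x y [Hx Hxy].
    (* exp (-x) - exp (-y) = exp (-x) (1 - exp (x - y)) <= 1 - exp (x - y) <= y - x *)
    replace (exp (- x) - exp (- y)) with (exp (- x) * (1 - exp (x - y)))
      by (rewrite Rmult_minus_distr_l, <- exp_plus; f_equal; ring_simplify; f_equal; ring).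
    assert (exp (- x) <= 1) by (rewrite <- exp_0; apply exp_le; lra).
    assert (exp (x - y) <= 1) by (rewrite <- exp_0; apply exp_le; lra).
    pose proof (exp_pos (- x)). pose proof (exp_ineq1_le (x - y)). nra. }
  intros Ha Hb. destruct (Rle_dec a b).
  - pose proof (K a b ltac:(lra)). assert (exp (- b) <= exp (- a)) by (apply exp_le; lra).
    rewrite Rabs_right, Rabs_left1 by lra. lra.
  - pose proof (K b a ltac:(lra)). assert (exp (- a) <= exp (- b)) by (apply exp_le; lra).
    rewrite Rabs_left1, Rabs_right by lra. lra.
Qed.

Lemma lsum_diff j x y h : length x = j -> length y = j ->
  (forall i, (i < j)%nat -> Rabs (nth i x 0 - nth i y 0) <= h) ->
  Rabs (lsum x - lsum y) <= INR j * h.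
Proof.
  revert x y; induction j; intros x y Hx Hy H.
  - destruct x; [|discriminate]. destruct y; [|discriminate]. unfold lsum; simpl.
    rewrite Rminus_diag, Rabs_R0; lra.
  - destruct x as [|a x]; [discriminate|]. destruct y as [|b y]; [discriminate|].
    simpl in Hx, Hy. unfold lsum; cbn [fold_right].
    replace (a + fold_right Rplus 0 x - (b + fold_right Rplus 0 y)) with
      ((a - b) + (fold_right Rplus 0 x - fold_right Rplus 0 y)) by ring.
    eapply Rle_trans; [apply Rabs_triang|]. rewrite S_INR.
    pose proof (H 0%nat ltac:(lia)) as H0. simpl in H0.
    assert (Rabs (lsum x - lsum y) <= INR j * h).
    { apply IHj; try lia. intros i Hi. apply (H (S i)); lia. }
    unfold lsum in H1. lra.
Qed.

Lemma lsum_nonneg j x : length x = j -> (forall i, (i < j)%nat -> 0 <= nth i x 0) -> 0 <= lsum x.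
Proof.
  revert x; induction j; intros x Hx H.
  - destruct x; [|discriminate]. unfold lsum; simpl; lra.
  - destruct x as [|a x]; [discriminate|]. unfold lsum; simpl.
    pose proof (H 0%nat ltac:(lia)). simpl in H0.
    assert (0 <= lsum x) by (apply (IHj x); [simpl in Hx; lia|intros i Hi; apply (H (S i)); lia]).
    unfold lsum in H1; lra.
Qed.

Lemma lsum_le j x M : length x = j -> (forall i, (i < j)%nat -> nth i x 0 <= M) -> lsum x <= INR j * M.
Proof.
  revert x; induction j; intros x Hx H.
  - destruct x; [|discriminate]. unfold lsum; simpl; lra.
  - destruct x as [|a x]; [discriminate|]. unfold lsum; cbn [fold_right]. rewrite S_INR.
    pose proof (H 0%nat ltac:(lia)). simpl in H0.
    assert (lsum x <= INR j * M) by (apply (IHj x); [simpl in Hx; lia|intros i Hi; apply (H (S i)); lia]).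
    unfold lsum in H1; lra.
Qed.

Lemma in_cell_lsum_close j n Rr c y y' : in_cell j n Rr c y -> in_cell j n Rr c y' ->
  Rabs (lsum y - lsum y') <= INR j * (Rr / INR n).
Proof.
  intros [Hl H1] [Hl' H2]. apply lsum_diff; auto.
  intros i Hi. specialize (H1 i Hi). specialize (H2 i Hi). rewrite S_INR in *.
  apply Rabs_le. lra.
Qed.

Lemma mul_exp_gap (a a' s s' B : R) : 0 <= a <= B -> 0 <= a' <= B -> 0 <= s -> 0 <= s' ->
  Rabs (a * exp (- s) - a' * exp (- s')) <= Rabs (a - a') + B * Rabs (s - s').
Proof.
  intros Ha Ha' Hs Hs'.
  pose proof (exp_neg_lipschitz _ _ Hs Hs') as EL.
  assert (E1 : exp (- s) <= 1) by (rewrite <- exp_0; apply exp_le; lra).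
  pose proof (exp_pos (- s)).
  replace (a * exp (- s) - a' * exp (- s')) with
    ((a - a') * exp (- s) + a' * (exp (- s) - exp (- s'))) by ring.
  eapply Rle_trans; [apply Rabs_triang|].
  rewrite !Rabs_mult, (Rabs_right (exp _)), (Rabs_right a') by lra.
  apply Rplus_le_compat.
  - pose proof (Rabs_pos (a - a')). nra.
  - apply Rmult_le_compat; auto using Rabs_pos; lra.
Qed.

(* Multiplying a bounded nonnegative function satisfying Riemann's criterion by
   exp (- sum of coordinates) preserves Riemann's criterion: on a grid of mesh h the
   extra oscillation is at most B j h times the volume Rr^j. *)
Lemma osc_vanishes_mul_exp j Rr g B : 0 < Rr -> 0 <= B ->
  (forall x, in_cube j Rr x -> 0 <= g x <= B) -> osc_vanishes j Rr g ->
  osc_vanishes j Rr (fun x => g x * exp (- lsum x)).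
Proof.
  intros HR HB Hb Hosc eta Heta.
  destruct (Hosc (eta / 2) ltac:(lra)) as [N1 HN1].
  destruct (INR_unbounded (B * INR j * Rr * Rr ^ j * 2 / eta)) as [N2 HN2].
  exists (S (Nat.max N1 N2)). intros n Hn Hn0 t t' Ht Ht'.
  specialize (HN1 n ltac:(lia) Hn0 t t' Ht Ht').
  set (h := Rr / INR n) in *.
  assert (Hnpos : 0 < INR n) by (apply lt_0_INR; lia).
  assert (Hh : 0 <= h) by (unfold h; apply Rdiv_le_0_compat; lra).
  assert (Hhj : 0 <= h ^ j) by (apply pow_le; auto).
  assert (Hcell : forall c, inbox 0 n j c ->
     Rabs (g (t c) * exp (- lsum (t c)) - g (t' c) * exp (- lsum (t' c))) <=
     Rabs (g (t c) - g (t' c)) + B * (INR j * h)).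
  { intros c Hc. pose proof (grid_tag_in_cell _ _ _ _ _ Ht Hc) as C1.
    pose proof (grid_tag_in_cell _ _ _ _ _ Ht' Hc) as C2.
    pose proof (in_cell_cube j n Rr c (t c) Hn0 ltac:(lra) Hc C1) as B1.
    pose proof (in_cell_cube j n Rr c (t' c) Hn0 ltac:(lra) Hc C2) as B2.
    pose proof (in_cell_lsum_close _ _ _ _ _ _ C1 C2) as D. fold h in D.
    eapply Rle_trans; [apply mul_exp_gap; auto|].
    - destruct B1 as [L1 B1]. apply (lsum_nonneg j); auto. intros i Hi; apply B1; auto.
    - destruct B2 as [L2 B2]. apply (lsum_nonneg j); auto. intros i Hi; apply B2; auto.
    - apply Rplus_le_compat_l, Rmult_le_compat_l; auto. }
  eapply Rle_trans.
  { apply Rmult_le_compat_r; [exact Hhj|]. apply bsum_le. intros c Hc. apply (Hcell c Hc). }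
  rewrite bsum_plus, bsum_const, Rmult_plus_distr_r.
  assert (Hkey : INR n ^ j * (B * (INR j * h)) * h ^ j <= eta / 2).
  { replace (INR n ^ j * (B * (INR j * h)) * h ^ j) with (B * INR j * h * (INR n * h) ^ j)
      by (rewrite Rpow_mult_distr; ring).
    replace (INR n * h) with Rr by (unfold h; field; lra). unfold h.
    assert (INR N2 <= INR n) by (apply le_INR; lia).
    assert (0 <= Rr ^ j) by (apply pow_le; lra).
    assert (0 <= B * INR j) by (apply Rmult_le_pos; auto; apply pos_INR).
    apply Rmult_le_reg_r with (INR n); auto. field_simplify; [|lra].
    apply Rmult_le_reg_r with (2 / eta); [apply Rdiv_lt_0_compat; lra|].
    replace (INR n * eta / 2 * (2 / eta)) with (INR n) by (field; lra).
    lra. }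
  lra.
Qed.

Definition fl (x : R) : nat := Z.to_nat (up x - 1).

Lemma fl_spec x : 0 <= x -> INR (fl x) <= x < INR (fl x) + 1.
Proof.
  intros Hx. destruct (archimed x) as [H1 H2].
  assert (Hup : (1 <= up x)%Z).
  { assert (0 < IZR (up x)) by lra. apply lt_IZR in H. lia. }
  unfold fl. rewrite INR_IZR_INZ. rewrite Z2Nat.id by lia.
  rewrite minus_IZR. simpl. lra.
Qed.

Lemma fl_mono x y : 0 <= x <= y -> (fl x <= fl y)%nat.
Proof.
  intros [Hx Hxy]. destruct (fl_spec x Hx). destruct (fl_spec y ltac:(lra)).
  assert (INR (fl x) < INR (fl y) + 1) by lra. rewrite <- S_INR in H3. apply INR_lt in H3. lia.
Qed.

Lemma fl_0 : fl 0 = 0%nat.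
Proof. destruct (fl_spec 0 ltac:(lra)). destruct (fl 0); [reflexivity|]. rewrite S_INR in H. pose proof (pos_INR n). lra. Qed.

Lemma pow_increment h dl j : 0 <= h -> 0 <= dl <= 1 -> (h + dl) ^ j - h ^ j <= dl * INR j * (h + 1) ^ j.
Proof.
  intros Hh Hd. induction j; [simpl; lra|].
  rewrite S_INR. cbn [pow].
  assert (0 <= h ^ j) by (apply pow_le; auto).
  assert (h ^ j <= (h + 1) ^ j) by (apply pow_incr; lra).
  assert (0 <= (h + 1) ^ j) by lra.
  assert ((h + dl) * ((h + dl) ^ j - h ^ j) <= (h + 1) * (dl * INR j * (h + 1) ^ j)).
  { apply Rmult_le_compat; try lra. assert (h ^ j <= (h + dl) ^ j) by (apply pow_incr; lra). lra. }
  assert (dl * h ^ j <= dl * ((h + 1) * (h + 1) ^ j)).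
  { apply Rmult_le_compat_l; [lra|]. nra. }
  nra.
Qed.

Lemma exp_pow a n : exp (INR n * a) = exp a ^ n.
Proof.
  induction n; simpl; [rewrite Rmult_0_l; apply exp_0|].
  rewrite <- IHn. rewrite <- exp_plus. f_equal. destruct n; simpl; ring.
Qed.

Lemma geo_sum q K : rsum 0 K (fun x => q ^ (S x)) * (1 - q) = q - q ^ (S K).
Proof.
  induction K; [unfold rsum; simpl; ring|].
  rewrite rsum_last. simpl Nat.add. rewrite Rmult_plus_distr_r, IHK. simpl. ring.
Qed.

Lemma geo_bound c dl K : 0 < c -> 0 < dl ->
  rsum 0 K (fun x => dl * exp (- (c * (INR (S x) * dl)))) <= 1 / c.
Proof.
  intros Hc Hd. set (q := exp (- (c * dl))).
  assert (Hq0 : 0 < q) by apply exp_pos.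
  assert (Hq1 : q < 1) by (unfold q; rewrite <- exp_0; apply exp_increasing; nra).
  rewrite (rsum_ext _ _ _ (fun x => dl * q ^ (S x))).
  2:{ intros x _. unfold q. rewrite <- exp_pow. f_equal. f_equal. ring. }
  rewrite rsum_scal.
  assert (HS : rsum 0 K (fun x => q ^ S x) <= q / (1 - q)).
  { apply Rmult_le_reg_r with (1 - q); [lra|]. rewrite geo_sum.
    field_simplify; [|lra]. assert (0 < q ^ S K) by (apply pow_lt; auto). lra. }
  (* q / (1 - q) <= 1 / (c dl) since 1 + c dl <= 1 / q *)
  assert (Hq2 : 1 + c * dl <= / q).
  { unfold q. rewrite <- exp_Ropp. rewrite Ropp_involutive. apply exp_ineq1_le. }
  assert (Hq3 : q / (1 - q) <= 1 / (c * dl)).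
  { assert (0 < c * dl) by nra.
    apply Rmult_le_reg_r with ((1 - q) * (c * dl)); [nra|].
    field_simplify; try lra.
    assert (q * (1 + c * dl) <= 1).
    { apply Rmult_le_reg_r with (/ q); [apply Rinv_0_lt_compat; auto|].
      rewrite Rmult_assoc, (Rmult_comm _ (/ q)), <- Rmult_assoc, Rmult_1_l.
      replace (q * / q) with 1 by (field; lra). lra. }
    nra. }
  apply Rle_trans with (dl * (1 / (c * dl))).
  - apply Rmult_le_compat_l; lra.
  - right. field; lra.
Qed.

Lemma nth_map_lt (F : nat -> R) (k : list nat) i : (i < length k)%nat -> nth i (map F k) 0 = F (nth i k 0%nat).
Proof.
  intros Hi. rewrite (nth_indep _ _ (F 0%nat)) by (rewrite length_map; auto). apply map_nth.
Qed.

Definition lattice_pt (dl : R) (k : list nat) : list R := map (fun x => INR (S x) * dl) k.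
Definition lattice_sum (j : nat) (f : list R -> R) (dl Rr : R) : R :=
  bsum 0 (fl (Rr / dl)) j (fun k => f (lattice_pt dl k)) * dl ^ j.

(* Cutting the lattice dl, 2 dl, ... at the points c h: the lattice points with
   index in [lo c, lo (c+1)) lie in [c h, (c+1) h], and there are h/dl of them up to 1. *)
Definition floor_idx (h dl : R) (c : nat) : nat := fl (INR c * h / dl).

Lemma floor_grid h dl c : 0 < h -> 0 < dl ->
  (floor_idx h dl c <= floor_idx h dl (S c))%nat /\
  Rabs (INR (floor_idx h dl (S c) - floor_idx h dl c) * dl - h) <= dl /\
  forall k, (floor_idx h dl c <= k < floor_idx h dl (S c))%nat ->
    INR c * h <= INR (S k) * dl <= INR (S c) * h.
Proof.
  intros Hh Hd. unfold floor_idx.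
  assert (Hlo : forall c, 0 <= INR c * h / dl)
    by (intros; apply Rdiv_le_0_compat; [apply Rmult_le_pos; [apply pos_INR|lra]|lra]).
  assert (Hmono : (fl (INR c * h / dl) <= fl (INR (S c) * h / dl))%nat).
  { apply fl_mono. split; auto. rewrite S_INR.
    apply Rmult_le_compat_r; [left; apply Rinv_0_lt_compat; auto|]. nra. }
  destruct (fl_spec _ (Hlo c)) as [A1 A2]. destruct (fl_spec _ (Hlo (S c))) as [A3 A4].
  set (l0 := fl (INR c * h / dl)) in *. set (l1 := fl (INR (S c) * h / dl)) in *.
  assert (E0 : INR c * h / dl * dl = INR c * h) by (field; lra).
  assert (E1 : INR (S c) * h / dl * dl = INR (S c) * h) by (field; lra).
  split; [auto|split].
  - rewrite minus_INR by auto. rewrite S_INR in A3, A4, E1.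
    replace ((INR l1 - INR l0) * dl - h) with ((INR l1 - INR l0 - h / dl) * dl) by (field; lra).
    rewrite Rabs_mult, (Rabs_right dl) by lra.
    assert (Rabs (INR l1 - INR l0 - h / dl) <= 1).
    { apply Rabs_le. replace ((INR c + 1) * h / dl) with (INR c * h / dl + h / dl) in A3, A4
        by (field; lra). lra. }
    nra.
  - intros k Hk.
    assert (INR l0 <= INR k) by (apply le_INR; lia).
    assert (INR (S k) <= INR l1) by (apply le_INR; lia).
    rewrite <- E0, <- E1. rewrite (S_INR k) in *. split; apply Rmult_le_compat_r; lra.
Qed.

(* A lattice sum is close to the corner Riemann sum of a coarse grid, by regrouping
   the lattice points into the coarse cells. *)
Lemma lattice_sum_close j n Rr dl f B eps : (0 < n)%nat -> 0 < Rr -> 0 < dl ->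
  (forall x, in_cube j Rr x -> Rabs (f x) <= B) -> oscillation_le j n Rr f eps ->
  Rabs (lattice_sum j f dl Rr - riemann_sum j n Rr f (corner_tag j n Rr)) <=
    eps + 3 * B * INR n ^ j * ((Rr / INR n + dl) ^ j - (Rr / INR n) ^ j).
Proof.
  intros Hn HR Hd Hb Hosc.
  assert (Hn' : 0 < INR n) by (apply lt_0_INR; auto).
  set (h := Rr / INR n) in *.
  assert (Hh : 0 < h) by (unfold h; apply Rdiv_lt_0_compat; auto).
  set (lo := floor_idx h dl).
  assert (HK : fl (Rr / dl) = lo n) by (unfold lo, floor_idx; f_equal; unfold h; field; split; lra).
  unfold lattice_sum. rewrite HK.
  apply regrouped_sum_close with (e := dl); auto; try lra.
  - unfold lo, floor_idx. rewrite Rmult_0_l. unfold Rdiv. rewrite Rmult_0_l. apply fl_0.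
  - intros c _. apply (floor_grid h dl c); auto.
  - intros c _. apply (floor_grid h dl c); auto.
  - intros c k Hc Hl Hk. split; [unfold lattice_pt; rewrite length_map; auto|].
    intros i Hi. unfold lattice_pt. rewrite nth_map_lt by lia.
    apply (floor_grid h dl (nth i c 0%nat)); auto.
  - apply corner_tag_spec; auto; lra.
Qed.

Lemma lattice_sum_converges j Rr f B I : 0 < Rr ->
  (forall x, in_cube j Rr x -> Rabs (f x) <= B) ->
  box_integral j f (fun _ => 0) (fun _ => Rr) I ->
  forall eps, 0 < eps -> exists dl0, 0 < dl0 /\
    forall dl, 0 < dl <= dl0 -> Rabs (lattice_sum j f dl Rr - I) <= eps.
Proof.
  intros HR Hb HI eps Heps.
  destruct (box_integral_riemann j f Rr I HI (eps / 4) ltac:(lra)) as [N0 HN0].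
  set (n := S N0).
  assert (Hn : (0 < n)%nat) by (unfold n; lia).
  specialize (HN0 n ltac:(unfold n; lia) Hn).
  assert (Hosc : oscillation_le j n Rr f (eps / 2)).
  { apply oscillation_of_sum_gap; auto; try lra. intros t t' Ht Ht'.
    pose proof (HN0 t Ht). pose proof (HN0 t' Ht').
    replace (riemann_sum j n Rr f t - riemann_sum j n Rr f t') with
      ((riemann_sum j n Rr f t - I) - (riemann_sum j n Rr f t' - I)) by ring.
    eapply Rle_trans; [apply Rabs_triang|]. rewrite Rabs_Ropp. lra. }
  assert (HB : 0 <= B) by (apply (cube_bound_nonneg j Rr f); auto; lra).
  assert (Hn' : 0 < INR n) by (apply lt_0_INR; auto).
  set (h := Rr / INR n).
  assert (Hh : 0 < h) by (unfold h; apply Rdiv_lt_0_compat; auto).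
  set (Q := 3 * B * INR n ^ j * INR j * (h + 1) ^ j + 1).
  assert (HQ : 0 < Q).
  { unfold Q. assert (0 <= 3 * B * INR n ^ j * INR j * (h + 1) ^ j); [|lra].
    repeat apply Rmult_le_pos; try lra; try apply pow_le; try apply pos_INR; lra. }
  exists (Rmin 1 (eps / 4 / Q)). split.
  { apply Rmin_glb_lt; [lra|]. apply Rdiv_lt_0_compat; lra. }
  intros dl [Hd1 Hd2].
  assert (Hd3 : dl <= 1) by (eapply Rle_trans; [exact Hd2|apply Rmin_l]).
  assert (Hd4 : dl * Q <= eps / 4).
  { assert (dl <= eps / 4 / Q) by (eapply Rle_trans; [exact Hd2|apply Rmin_r]).
    apply Rmult_le_compat_r with (r := Q) in H; [|lra].
    replace (eps / 4 / Q * Q) with (eps / 4) in H by (field; lra). lra. }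
  pose proof (lattice_sum_close j n Rr dl f B (eps / 2) Hn HR Hd1 Hb Hosc) as G. fold h in G.
  pose proof (HN0 (corner_tag j n Rr) (corner_tag_spec j n Rr ltac:(lra) Hn)) as G2.
  assert (Herr : 3 * B * INR n ^ j * ((h + dl) ^ j - h ^ j) <= eps / 4).
  { assert (0 <= 3 * B * INR n ^ j) by (repeat apply Rmult_le_pos; try lra; apply pow_le, pos_INR).
    pose proof (pow_increment h dl j ltac:(lra) ltac:(lra)).
    apply Rle_trans with (3 * B * INR n ^ j * (dl * INR j * (h + 1) ^ j));
      [apply Rmult_le_compat_l; auto|].
    unfold Q in Hd4. nra. }
  apply Rabs_le_inv in G. apply Rabs_def2 in G2. apply Rabs_le. lra.
Qed.

Definition nonneg_pt (j : nat) (x : list R) : Prop :=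
  length x = j /\ forall i, (i < j)%nat -> 0 <= nth i x 0.

Lemma lattice_pt_nonneg j dl k : 0 <= dl -> length k = j -> nonneg_pt j (lattice_pt dl k).
Proof.
  intros Hd Hl. split; [unfold lattice_pt; rewrite length_map; auto|].
  intros i Hi. unfold lattice_pt. rewrite nth_map_lt by lia. apply Rmult_le_pos; [apply pos_INR|auto].
Qed.

Lemma lattice_sum_mono j f dl R1 R2 : (forall x, nonneg_pt j x -> 0 <= f x) -> 0 < dl -> 0 <= R1 <= R2 ->
  lattice_sum j f dl R1 <= lattice_sum j f dl R2.
Proof.
  intros Hf Hd HR. unfold lattice_sum. apply Rmult_le_compat_r; [apply pow_le; lra|].
  apply bsum_mono_n.
  - apply fl_mono. split; [apply Rdiv_le_0_compat; lra|]. apply Rmult_le_compat_r; [left; apply Rinv_0_lt_compat|]; lra.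
  - intros k [Hl _]. apply Hf. apply lattice_pt_nonneg; auto; lra.
Qed.

Lemma exp_lattice_pt dl k : exp (- lsum (lattice_pt dl k) / 2) * dl ^ length k =
  lprod (map (fun x => dl * exp (- (/ 2 * (INR (S x) * dl)))) k).
Proof.
  induction k as [|x k IH].
  - unfold lattice_pt, lsum, lprod; cbn [map fold_right length pow].
    replace (- 0 / 2) with 0 by field. rewrite exp_0. ring.
  - unfold lattice_pt, lsum, lprod in *; cbn [map fold_right length pow]. rewrite <- IH.
    set (S0 := fold_right Rplus 0 (map (fun x0 => INR (S x0) * dl) k)).
    replace (- (INR (S x) * dl + S0) / 2) with (- (/ 2 * (INR (S x) * dl)) + - S0 / 2) by field.
    rewrite exp_plus. ring.
Qed.

Lemma lattice_sum_bound j f dl Rr M0 : (forall x, nonneg_pt j x -> f x <= M0 * exp (- lsum x / 2)) -> 0 <= M0 ->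
  0 < dl -> 0 <= Rr -> lattice_sum j f dl Rr <= M0 * 2 ^ j.
Proof.
  intros Hf HM Hd HR. unfold lattice_sum.
  apply Rle_trans with (bsum 0 (fl (Rr / dl)) j (fun k => M0 * (exp (- lsum (lattice_pt dl k) / 2) * dl ^ j))).
  - rewrite Rmult_comm, <- bsum_scal. apply bsum_le. intros k Hk.
    destruct Hk as [Hl _]. specialize (Hf _ (lattice_pt_nonneg j dl k ltac:(lra) Hl)).
    assert (0 <= dl ^ j) by (apply pow_le; lra). nra.
  - rewrite bsum_scal. apply Rmult_le_compat_l; auto.
    rewrite (bsum_ext _ _ _ _ (fun k => lprod (map (fun x => dl * exp (- (/ 2 * (INR (S x) * dl)))) k))).
    + rewrite bsum_prod. apply pow_incr. split.
      * apply rsum_nonneg; intros. apply Rmult_le_pos; [lra|left; apply exp_pos].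
      * pose proof (geo_bound (/ 2) dl (fl (Rr / dl)) ltac:(lra) Hd). 
        replace (1 / / 2) with 2 in H by field. exact H.
    + intros k [Hl _]. rewrite <- exp_lattice_pt. rewrite Hl. reflexivity.
Qed.

(* The improper integral of a nonnegative integrable function dominated by
   M0 exp (-|x|/2): the box integrals increase with the box and are bounded by M0 2^j,
   so they converge to their supremum L. *)
Section ImproperIntegral.
Variable j : nat.
Variable f : list R -> R.
Variable M0 : R.
Hypothesis HM0 : 0 <= M0.
Hypothesis Hf0 : forall x, nonneg_pt j x -> 0 <= f x.
Hypothesis Hfb : forall x, nonneg_pt j x -> f x <= M0 * exp (- lsum x / 2).
Hypothesis Hint : forall Rr, 0 < Rr -> exists I, box_integral j f (fun _ => 0) (fun _ => Rr) I.

Lemma cube_bound Rr : forall x, in_cube j Rr x -> Rabs (f x) <= M0.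
Proof.
  intros x [Hl Hx]. assert (Hn : nonneg_pt j x) by (split; auto; intros i Hi; apply Hx; auto).
  pose proof (Hf0 x Hn). pose proof (Hfb x Hn). rewrite Rabs_right by lra.
  assert (exp (- lsum x / 2) <= 1).
  { rewrite <- exp_0. apply exp_le. assert (0 <= lsum x) by (apply (lsum_nonneg j); auto; apply Hn). lra. }
  nra.
Qed.

(* Box integrals increase with the box (compare the lattice sums, which do). *)
Lemma box_integral_mono R1 R2 I1 I2 : 0 < R1 <= R2 -> box_integral j f (fun _ => 0) (fun _ => R1) I1 ->
  box_integral j f (fun _ => 0) (fun _ => R2) I2 -> I1 <= I2.
Proof.
  intros HR H1 H2. apply Rnot_lt_le. intros Hlt.
  set (eps := (I1 - I2) / 3).
  destruct (lattice_sum_converges j R1 f M0 I1 ltac:(lra) (cube_bound R1) H1 eps ltac:(unfold eps; lra)) as [d1 [Hd1 G1]].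
  destruct (lattice_sum_converges j R2 f M0 I2 ltac:(lra) (cube_bound R2) H2 eps ltac:(unfold eps; lra)) as [d2 [Hd2 G2]].
  set (dl := Rmin d1 d2).
  assert (0 < dl) by (apply Rmin_glb_lt; auto).
  specialize (G1 dl ltac:(split; [auto|apply Rmin_l])). specialize (G2 dl ltac:(split; [auto|apply Rmin_r])).
  pose proof (lattice_sum_mono j f dl R1 R2 Hf0 H ltac:(lra)).
  apply Rabs_le_inv in G1, G2. unfold eps in *. lra.
Qed.

(* Box integrals are bounded by M0 2^j, like the lattice sums. *)
Lemma box_integral_bound Rr I : 0 < Rr -> box_integral j f (fun _ => 0) (fun _ => Rr) I -> I <= M0 * 2 ^ j.
Proof.
  intros HR H. apply Rnot_lt_le. intros Hlt.
  set (eps := (I - M0 * 2 ^ j) / 2).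
  destruct (lattice_sum_converges j Rr f M0 I HR (cube_bound Rr) H eps ltac:(unfold eps; lra)) as [d1 [Hd1 G1]].
  specialize (G1 d1 ltac:(lra)). pose proof (lattice_sum_bound j f d1 Rr M0 Hfb HM0 Hd1 ltac:(lra)).
  apply Rabs_le_inv in G1. unfold eps in *. lra.
Qed.

Lemma improper_integral_exists : exists L, improper_integral j f L /\
  (forall Rr I, 0 < Rr -> box_integral j f (fun _ => 0) (fun _ => Rr) I -> I <= L) /\
  (forall eps, 0 < eps -> exists R0, 0 < R0 /\ forall Rr I, R0 <= Rr ->
       box_integral j f (fun _ => 0) (fun _ => Rr) I -> L - eps < I).
Proof.
  set (E := fun y => exists Rr, 0 < Rr /\ box_integral j f (fun _ => 0) (fun _ => Rr) y).
  assert (Hb : bound E).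
  { exists (M0 * 2 ^ j). intros y [Rr [HR Hy]]. apply (box_integral_bound Rr); auto. }
  assert (Hne : exists y, E y).
  { destruct (Hint 1 ltac:(lra)) as [I HI]. exists I, 1. split; [lra|auto]. }
  destruct (completeness E Hb Hne) as [L [HL1 HL2]].
  assert (Hup : forall Rr I, 0 < Rr -> box_integral j f (fun _ => 0) (fun _ => Rr) I -> I <= L).
  { intros Rr I HR HI. apply HL1. exists Rr; auto. }
  assert (Hlow : forall eps, 0 < eps -> exists R0, 0 < R0 /\ forall Rr I, R0 <= Rr ->
       box_integral j f (fun _ => 0) (fun _ => Rr) I -> L - eps < I).
  { intros eps Heps.
    assert (exists y, E y /\ L - eps < y).
    { apply NNPP. intros Hc. assert (is_upper_bound E (L - eps)).
      { intros y Hy. apply Rnot_lt_le. intros Hlt. apply Hc. exists y; auto. }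
      specialize (HL2 _ H). lra. }
    destruct H as [y [[R0 [HR0 Hy]] Hly]]. exists R0. split; auto.
    intros Rr I HRr HI. assert (y <= I) by (apply (box_integral_mono R0 Rr); auto; lra). lra. }
  exists L. split; [|split; auto].
  intros eps Heps. destruct (Hlow eps Heps) as [R0 [HR0 HR]]. exists R0. intros Rr HRr.
  destruct (Hint Rr ltac:(lra)) as [I HI]. exists I. split; auto.
  specialize (HR Rr I HRr HI). specialize (Hup Rr I ltac:(lra) HI).
  apply Rabs_def1; lra.
Qed.

End ImproperIntegral.

Lemma one_minus_le_exp x : 1 - x <= exp (- x).
Proof. pose proof (exp_ineq1_le (- x)). lra. Qed.

Lemma one_minus_ge_exp x : 0 <= x < 1 -> exp (- (x / (1 - x))) <= 1 - x.
Proof.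
  intros Hx. pose proof (exp_ineq1_le (x / (1 - x))) as H.
  assert (1 + x / (1 - x) = / (1 - x)) by (field; lra). rewrite H0 in H.
  rewrite exp_Ropp. replace (1 - x) with (/ / (1 - x)) at 2 by (field; lra).
  apply Rinv_le_contravar; auto. apply Rinv_0_lt_compat; lra.
Qed.

Lemma exp_le_lin y : 0 <= y <= 1 / 2 -> exp y <= 1 + 2 * y.
Proof.
  intros Hy. pose proof (one_minus_le_exp y).
  assert (exp y * exp (- y) = 1) by (rewrite <- exp_plus; replace (y + - y) with 0 by ring; apply exp_0).
  pose proof (exp_pos y). assert (0 < 1 - y) by lra.
  assert (exp y * (1 - y) <= 1) by nra.
  nra.
Qed.

Lemma exp_neg_le_inv x : 0 < x -> exp (- x) <= 1 / x.
Proof.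
  intros Hx. rewrite exp_Ropp. pose proof (exp_ineq1_le x). pose proof (exp_pos x).
  apply Rmult_le_reg_r with (x * exp x); [nra|].
  replace (/ exp x * (x * exp x)) with x by (field; lra).
  replace (1 / x * (x * exp x)) with (exp x) by (field; lra). lra.
Qed.

Lemma bernoulli x n : 0 <= x <= 1 -> 1 - INR n * x <= (1 - x) ^ n.
Proof.
  intros Hx. induction n; [simpl; lra|].
  rewrite S_INR. cbn [pow]. assert (0 <= (1 - x) ^ n) by (apply pow_le; lra).
  pose proof (pos_INR n). nra.
Qed.

Lemma pow_le_exp b u : 0 <= 1 - b -> (1 - b) ^ u <= exp (- (b * INR u)).
Proof.
  intros H. replace (- (b * INR u)) with (INR u * (- b)) by ring. rewrite exp_pow.
  apply pow_incr. split; auto. apply one_minus_le_exp.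
Qed.

Lemma pow_ge_exp a u : 0 <= a < 1 -> exp (- (a / (1 - a) * INR u)) <= (1 - a) ^ u.
Proof.
  intros H. replace (- (a / (1 - a) * INR u)) with (INR u * (- (a / (1 - a)))) by ring. rewrite exp_pow.
  apply pow_incr. split; [left; apply exp_pos|]. apply one_minus_ge_exp; auto.
Qed.

Lemma pow_ratio_lower (m N : R) (j : nat) : 0 < m -> 0 < N -> INR j <= m ->
  (m / N) ^ j * (1 - INR j * INR j / m) <= ((m - INR j) / N) ^ j.
Proof.
  intros Hm HN Hj.
  replace ((m - INR j) / N) with (m / N * (1 - INR j / m)) by (field; lra).
  rewrite Rpow_mult_distr. apply Rmult_le_compat_l; [apply pow_le, Rdiv_le_0_compat; lra|].
  replace (INR j * INR j / m) with (INR j * (INR j / m)) by (field; lra).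
  apply bernoulli. split; [apply Rdiv_le_0_compat; [apply pos_INR|lra]|].
  apply Rmult_le_reg_r with m; auto. field_simplify; lra.
Qed.

(* Local estimates for the marginal probability P(k) = ncomp_rest N (m-j) k / ncomp N m
   of a multi-index k with |k| dl <= j R, where dl = m/N. *)
Section LocalEstimates.
Variables N m j : nat.
Variable R : R.
Variable k : list nat.
Hypothesis Hj : (1 <= j)%nat.
Hypothesis Hm : (j + 2 <= m <= N)%nat.
Hypothesis HR : 0 < R.
Hypothesis Hk : inbox 1 N j k.
Let dl := INR m / INR N.
Let K := nsum k.
Hypothesis HKd : INR K * dl <= INR j * R.

Let Nr := INR N.
Let mr := INR m.
Let jr := INR j.
Let Kr := INR K.

Lemma local_basics : 0 < Nr /\ 0 < mr /\ 1 <= jr /\ jr + 2 <= mr /\ mr <= Nr /\ jr <= Kr /\ 0 < dl /\ dl <= 1.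
Proof.
  assert (HK := nsum_inbox_ge _ _ _ _ Hk). rewrite Nat.mul_1_l in HK.
  unfold Nr, mr, jr, Kr, dl.
  assert (0 < INR N) by (apply lt_0_INR; lia). assert (0 < INR m) by (apply lt_0_INR; lia).
  assert (1 <= INR j) by (replace 1 with (INR 1) by reflexivity; apply le_INR; lia).
  assert (INR j + 2 <= INR m) by (replace 2 with (INR 2) by reflexivity; rewrite <- plus_INR; apply le_INR; lia).
  assert (INR m <= INR N) by (apply le_INR; lia).
  assert (INR j <= INR K) by (apply le_INR; unfold K; lia).
  repeat split; auto.
  - apply Rdiv_lt_0_compat; auto.
  - apply Rmult_le_reg_r with (INR N); auto. field_simplify; lra.
Qed.

Lemma K_over_N : Kr / Nr <= jr * R / mr.
Proof.
  destruct local_basics as (HN & Hmr & _). unfold dl in HKd. fold Kr mr Nr jr in HKd.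
  replace (Kr / Nr) with (Kr * (mr / Nr) * / mr) by (field; lra).
  replace (jr * R / mr) with (jr * R * / mr) by (field; lra).
  apply Rmult_le_compat_r; [left; apply Rinv_0_lt_compat; lra|lra].
Qed.

Lemma local_upper : ncomp_rest N (m - j) k / ncomp N m <= dl ^ j * exp (- (Kr * dl)) * exp (jr * (jr + 1) * R / mr + jr * dl).
Proof.
  destruct local_basics as (HN & Hmr & Hjr & Hjm & HmN & HjK & Hd0 & Hd1).
  assert (Hc : 0 < ncomp N m) by (apply ncomp_pos; lia).
  pose proof (ncomp_rest_upper N m j k ltac:(lia) Hk) as H. fold dl K in H.
  set (b := INR (m - j - 1) / INR (N - j)) in *.
  assert (Hb1 : INR (m - j - 1) = mr - jr - 1) by (rewrite !minus_INR by lia; reflexivity).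
  assert (Hb2 : INR (N - j) = Nr - jr) by (rewrite minus_INR by lia; reflexivity).
  assert (Hbv : b = (mr - jr - 1) / (Nr - jr)) by (unfold b; rewrite Hb1, Hb2; reflexivity).
  assert (Hb0 : 0 <= b) by (rewrite Hbv; apply Rdiv_le_0_compat; lra).
  assert (Hbd : b <= dl).
  { rewrite Hbv. unfold dl. fold mr Nr. apply Rmult_le_reg_r with (Nr * (Nr - jr)); [nra|].
    field_simplify; try lra. nra. }
  assert (Hdb : dl - b <= (jr + 1) / Nr).
  { rewrite Hbv. unfold dl. fold mr Nr. apply Rmult_le_reg_r with (Nr * (Nr - jr)); [nra|].
    field_simplify; try lra. nra. }
  assert (Hb1' : 0 <= 1 - b) by lra.
  assert (HE := pow_le_exp b (K - j) Hb1').
  rewrite minus_INR in HE by (unfold K; pose proof (nsum_inbox_ge _ _ _ _ Hk); lia). fold Kr jr in HE.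
  apply Rmult_le_reg_r with (ncomp N m); auto.
  replace (ncomp_rest N (m - j) k / ncomp N m * ncomp N m) with (ncomp_rest N (m - j) k) by (field; lra).
  eapply Rle_trans; [exact H|].
  assert (Hdj : 0 <= dl ^ j) by (apply pow_le; lra).
  replace (ncomp N m * dl ^ j * (1 - b) ^ (K - j)) with (dl ^ j * (1 - b) ^ (K - j) * ncomp N m) by ring.
  apply Rmult_le_compat_r; [lra|]. rewrite Rmult_assoc. apply Rmult_le_compat_l; auto.
  rewrite <- exp_plus. eapply Rle_trans; [exact HE|]. apply exp_le.
  assert (HKN : Kr * ((jr + 1) / Nr) <= jr * (jr + 1) * R / mr).
  { pose proof K_over_N.
    replace (Kr * ((jr + 1) / Nr)) with ((Kr / Nr) * (jr + 1)) by (field; lra).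
    replace (jr * (jr + 1) * R / mr) with ((jr * R / mr) * (jr + 1)) by (field; lra).
    apply Rmult_le_compat_r; lra. }
  assert (Kr * (dl - b) <= Kr * ((jr + 1) / Nr)) by (apply Rmult_le_compat_l; lra).
  assert (b * jr <= jr * dl) by nra.
  nra.
Qed.

Hypothesis Hm4 : 4 * INR j * R <= INR m.
Hypothesis Hd4 : dl <= 1 / 4.
Hypothesis Hjj : INR j * INR j <= INR m.

Lemma local_sizes : Kr <= Nr / 4 /\ mr <= Nr / 4.
Proof.
  destruct local_basics as (HN & Hmr & Hjr & Hjm & HmN & HjK & Hd0 & Hd1).
  pose proof K_over_N. unfold dl in Hd4. fold mr Nr in Hd4. fold mr jr in Hm4. split.
  - apply Rle_trans with (jr * R / mr * Nr).
    + replace Kr with (Kr / Nr * Nr) at 1 by (field; lra). apply Rmult_le_compat_r; lra.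
    + replace (jr * R / mr * Nr) with (jr * R * (Nr / mr)) by (field; lra).
      replace (Nr / 4) with (mr / 4 * (Nr / mr)) by (field; lra).
      apply Rmult_le_compat_r; [apply Rdiv_le_0_compat|]; lra.
  - replace mr with (mr / Nr * Nr) by (field; lra). replace (Nr / 4) with (1 / 4 * Nr) by field.
    apply Rmult_le_compat_r; lra.
Qed.

Lemma local_second_factor :
  exp (- (Kr * dl)) * (1 - 2 * jr * R * (jr * R / mr + dl)) <=
  (1 - INR (m - j - 1) / INR (N - K)) ^ (K - j).
Proof.
  destruct local_basics as (HN & Hmr & Hjr & Hjm & HmN & HjK & Hd0 & Hd1).
  destruct local_sizes as [HK1 Hm1]. pose proof K_over_N as E3.
  set (a := INR (m - j - 1) / INR (N - K)).
  assert (Hav : a = (mr - jr - 1) / (Nr - Kr)).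
  { assert (HKN : (K <= N)%nat) by (apply INR_le; fold Kr Nr; lra).
    unfold a. rewrite !minus_INR by lia. reflexivity. }
  assert (Ha0 : 0 <= a) by (rewrite Hav; apply Rdiv_le_0_compat; lra).
  assert (Ha1 : a < 1).
  { rewrite Hav. apply Rmult_lt_reg_r with (Nr - Kr); [lra|]. field_simplify; lra. }
  set (D := Nr - Kr - mr).
  assert (HD : Nr / 2 <= D) by (unfold D; lra).
  assert (Haa : a / (1 - a) <= mr / D).
  { rewrite Hav. apply Rmult_le_reg_r with ((Nr - Kr - (mr - jr - 1)) * D); [unfold D; nra|].
    field_simplify; try (unfold D; lra). unfold D. nra. }
  (* the exponent Kr a/(1-a) exceeds Kr dl by at most 2 jR (jR/m + dl) *)
  set (z := Kr * (a / (1 - a)) - Kr * dl).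
  assert (Hz : z <= 2 * jr * R * (jr * R / mr + dl)).
  { unfold z, dl. fold mr Nr.
    assert (Kr * (a / (1 - a)) <= Kr * (mr / D)) by (apply Rmult_le_compat_l; lra).
    assert (E1 : Kr * (mr / D) - Kr * (mr / Nr) = (Kr * (mr / Nr)) * ((Kr + mr) / D))
      by (unfold D; field; split; lra).
    assert (E2 : (Kr + mr) / D <= 2 * ((Kr + mr) / Nr)).
    { apply Rmult_le_reg_r with (D * Nr); [nra|]. field_simplify; try lra. nra. }
    assert (E4 : (Kr + mr) / Nr <= jr * R / mr + mr / Nr).
    { replace ((Kr + mr) / Nr) with (Kr / Nr + mr / Nr) by (field; lra). lra. }
    assert (0 <= Kr * (mr / Nr)) by (apply Rmult_le_pos; [lra|left; auto]).
    assert (0 <= (Kr + mr) / D) by (apply Rdiv_le_0_compat; lra).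
    assert ((Kr * (mr / Nr)) * ((Kr + mr) / D) <= (jr * R) * (2 * (jr * R / mr + mr / Nr))).
    { apply Rmult_le_compat; auto. unfold dl in HKd. fold Kr mr Nr jr in HKd. lra. }
    lra. }
  fold a. eapply Rle_trans; [|apply pow_ge_exp; lra].
  rewrite minus_INR by (unfold K; pose proof (nsum_inbox_ge _ _ _ _ Hk); lia). fold Kr jr.
  apply Rle_trans with (exp (- (Kr * dl)) * (1 - z)).
  - apply Rmult_le_compat_l; [left; apply exp_pos|lra].
  - apply Rle_trans with (exp (- (Kr * dl)) * exp (- z)).
    + apply Rmult_le_compat_l; [left; apply exp_pos|]. apply one_minus_le_exp.
    + rewrite <- exp_plus. apply exp_le. unfold z.
      assert (0 <= a / (1 - a)) by (apply Rdiv_le_0_compat; lra). nra.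
Qed.

Lemma local_lower : dl ^ j * exp (- (Kr * dl)) * (1 - jr * jr / mr - 2 * jr * R * (jr * R / mr + dl))
   <= ncomp_rest N (m - j) k / ncomp N m.
Proof.
  destruct local_basics as (HN & Hmr & Hjr & Hjm & HmN & HjK & Hd0 & Hd1).
  destruct local_sizes as [HK1 Hm1]. fold mr jr in Hjj.
  assert (Hc : 0 < ncomp N m) by (apply ncomp_pos; lia).
  assert (HWc : (K + (m - j) + 1 <= N)%nat).
  { apply INR_le. rewrite !plus_INR, minus_INR by lia. fold Kr mr jr Nr. simpl. lra. }
  pose proof (ncomp_rest_lower N m j k ltac:(lia) Hk HWc) as H. fold K in H.
  pose proof local_second_factor as H2.
  assert (H1 : dl ^ j * (1 - jr * jr / mr) <= ((INR m - INR j) / INR N) ^ j)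
    by (apply pow_ratio_lower; fold mr Nr jr; lra).
  set (a := INR (m - j - 1) / INR (N - K)) in *.
  set (al := jr * jr / mr) in *. set (be := 2 * jr * R * (jr * R / mr + dl)) in *.
  assert (Hal : 0 <= al <= 1).
  { unfold al. split; [apply Rdiv_le_0_compat; nra|].
    apply Rmult_le_reg_r with mr; auto. field_simplify; lra. }
  assert (Hbe : 0 <= be).
  { unfold be. assert (0 <= jr * R / mr) by (apply Rdiv_le_0_compat; nra).
    apply Rmult_le_pos; [nra|lra]. }
  assert (Hdj : 0 <= dl ^ j) by (apply pow_le; lra).
  assert (He : 0 < exp (- (Kr * dl))) by apply exp_pos.
  assert (HP : 0 <= ((INR m - INR j) / INR N) ^ j)
    by (apply pow_le, Rdiv_le_0_compat; fold mr jr Nr; lra).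
  apply Rmult_le_reg_r with (ncomp N m); auto.
  replace (ncomp_rest N (m - j) k / ncomp N m * ncomp N m) with (ncomp_rest N (m - j) k)
    by (field; lra).
  destruct (Rle_dec 0 (1 - al - be)) as [Hpos|Hneg].
  - (* (1 - al - be) <= (1 - al) (1 - be), a product of two lower bounds *)
    eapply Rle_trans; [|exact H].
    apply Rle_trans with (ncomp N m * (dl ^ j * (1 - al)) * (exp (- (Kr * dl)) * (1 - be))).
    + assert (0 <= dl ^ j * exp (- (Kr * dl)) * ncomp N m) by (repeat apply Rmult_le_pos; lra).
      assert (1 - al - be <= (1 - al) * (1 - be)) by nra.
      nra.
    + rewrite !Rmult_assoc. apply Rmult_le_compat_l; [lra|].
      rewrite <- Rmult_assoc. apply Rmult_le_compat; auto; try apply Rmult_le_pos; lra.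
  - assert (0 <= ncomp_rest N (m - j) k)
      by (unfold ncomp_rest; destruct (Nat.leb _ _); [apply ncomp_nonneg|lra]).
    assert (0 <= dl ^ j * exp (- (Kr * dl)) * ncomp N m) by (repeat apply Rmult_le_pos; lra).
    nra.
Qed.
End LocalEstimates.

Definition ndeg (d : R) : nat := Z.to_nat (up d).

Lemma ndeg_ge d : 0 <= d -> d <= INR (ndeg d).
Proof.
  intros Hd. destruct (archimed d) as [H1 H2]. unfold ndeg.
  assert (0 < IZR (up d)) by lra. apply lt_IZR in H.
  rewrite INR_IZR_INZ, Z2Nat.id by lia. lra.
Qed.

Lemma rpow_le y d : 0 <= y -> 0 <= d -> rpow y d <= 1 + y ^ ndeg d.
Proof.
  intros Hy Hd. assert (0 <= y ^ ndeg d) by (apply pow_le; auto).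
  unfold rpow. destruct (Req_EM_T y 0) as [E|E].
  - destruct (Req_EM_T d 0); lra.
  - assert (Hy' : 0 < y) by lra. destruct (Rle_dec y 1).
    + unfold Rpower. assert (ln y <= 0).
      { rewrite <- ln_1. destruct r; [left; apply ln_increasing; auto|subst; lra]. }
      assert (exp (d * ln y) <= 1) by (rewrite <- exp_0; apply exp_le; nra). lra.
    + rewrite <- Rpower_pow by auto. assert (Rpower y d <= Rpower y (INR (ndeg d))).
      { apply Rle_Rpower; [lra|apply ndeg_ge; auto]. }
      lra.
Qed.

Lemma poly_exp y n : 0 <= y -> 1 + y ^ n <= (1 + (8 * INR n) ^ n) * exp (y / 8).
Proof.
  intros Hy. assert (He : 1 <= exp (y / 8)) by (rewrite <- exp_0; apply exp_le; lra).
  assert (Hp : 0 <= (8 * INR n) ^ n) by (apply pow_le; pose proof (pos_INR n); lra).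
  destruct n.
  - simpl. lra.
  - assert (Hn : 0 < INR (S n)) by (apply lt_0_INR; lia).
    assert (H1 : y / (8 * INR (S n)) <= exp (y / (8 * INR (S n)))).
    { pose proof (exp_ineq1_le (y / (8 * INR (S n)))). lra. }
    assert (H2 : (y / (8 * INR (S n))) ^ S n <= exp (y / 8)).
    { replace (y / 8) with (INR (S n) * (y / (8 * INR (S n)))) by (field; lra).
      rewrite exp_pow. apply pow_incr. split; auto. apply Rdiv_le_0_compat; lra. }
    assert (H3 : y ^ S n = (8 * INR (S n)) ^ S n * (y / (8 * INR (S n))) ^ S n).
    { rewrite <- Rpow_mult_distr. f_equal. field. lra. }
    rewrite H3. assert ((8 * INR (S n)) ^ S n * (y / (8 * INR (S n))) ^ S n <= (8 * INR (S n)) ^ S n * exp (y / 8))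
      by (apply Rmult_le_compat_l; auto). nra.
Qed.

Lemma lsum_map dl k : lsum (map (fun x => INR x * dl) k) = INR (nsum k) * dl.
Proof.
  induction k as [|x k IH]; unfold lsum in *; simpl; [lra|].
  rewrite IH. rewrite plus_INR. ring.
Qed.

Lemma nonneg_pt_map j dl k : 0 <= dl -> length k = j -> nonneg_pt j (map (fun x => INR x * dl) k).
Proof.
  intros Hd Hl. split; [rewrite length_map; auto|]. intros i Hi. rewrite nth_map_lt by lia.
  apply Rmult_le_pos; [apply pos_INR|auto].
Qed.

Lemma exp_nsum c dl k : dl ^ length k * exp (- (c * (INR (nsum k) * dl))) =
  lprod (map (fun x => dl * exp (- (c * (INR x * dl)))) k).
Proof.
  induction k as [|x k IH]; unfold lprod in *; cbn [map fold_right length pow nsum].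
  - unfold nsum; simpl. replace (- (c * (0 * dl))) with 0 by ring. rewrite exp_0; ring.
  - rewrite <- IH. unfold nsum; cbn [fold_right]. fold (nsum k). rewrite plus_INR.
    replace (- (c * ((INR x + INR (nsum k)) * dl))) with (- (c * (INR x * dl)) + - (c * (INR (nsum k) * dl))) by ring.
    rewrite exp_plus. ring.
Qed.

Lemma tail_geo j N c dl : 0 < c -> 0 < dl ->
  bsum 1 N j (fun k => dl ^ j * exp (- (c * (INR (nsum k) * dl)))) <= (1 / c) ^ j.
Proof.
  intros Hc Hd.
  rewrite (bsum_ext _ _ _ _ (fun k => lprod (map (fun x => dl * exp (- (c * (INR x * dl)))) k))).
  - rewrite bsum_prod. apply pow_incr. split.
    + apply rsum_nonneg; intros. apply Rmult_le_pos; [lra|left; apply exp_pos].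
    + rewrite rsum_shift. apply geo_bound; auto.
  - intros k [Hl _]. rewrite <- exp_nsum. rewrite Hl. reflexivity.
Qed.

Lemma local_tail_bound N m j k : (2 * j + 2 <= m <= N)%nat -> inbox 1 N j k ->
  ncomp_rest N (m - j) k / ncomp N m <= exp (INR j) * (INR m / INR N) ^ j * exp (- (/ 2 * (INR (nsum k) * (INR m / INR N)))).
Proof.
  intros Hm Hk. set (dl := INR m / INR N).
  assert (HK := nsum_inbox_ge _ _ _ _ Hk). rewrite Nat.mul_1_l in HK.
  assert (HN : 0 < INR N) by (apply lt_0_INR; lia). assert (Hmr : 0 < INR m) by (apply lt_0_INR; lia).
  assert (Hc : 0 < ncomp N m) by (apply ncomp_pos; lia).
  pose proof (ncomp_rest_upper N m j k ltac:(lia) Hk) as H. fold dl in H.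
  set (b := INR (m - j - 1) / INR (N - j)) in *.
  assert (Hb1 : INR (m - j - 1) = INR m - INR j - 1) by (rewrite !minus_INR by lia; reflexivity).
  assert (Hb2 : INR (N - j) = INR N - INR j) by (rewrite minus_INR by lia; reflexivity).
  assert (Hjm : 2 * INR j + 2 <= INR m).
  { replace 2 with (INR 2) by reflexivity. rewrite <- mult_INR, <- plus_INR. apply le_INR; lia. }
  assert (HmN : INR m <= INR N) by (apply le_INR; lia).
  assert (Hj0 := pos_INR j).
  assert (Hbv : b = (INR m - INR j - 1) / (INR N - INR j)) by (unfold b; rewrite Hb1, Hb2; reflexivity).
  assert (Hb0 : dl / 2 <= b).
  { rewrite Hbv. unfold dl. apply Rmult_le_reg_r with (2 * INR N * (INR N - INR j)); [nra|].
    field_simplify; try lra. nra. }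
  assert (Hb1' : b <= 1).
  { rewrite Hbv. apply Rmult_le_reg_r with (INR N - INR j); [lra|]. field_simplify; lra. }
  assert (Hdl : 0 < dl) by (unfold dl; apply Rdiv_lt_0_compat; auto).
  assert (HE := pow_le_exp b (nsum k - j) ltac:(lra)).
  rewrite minus_INR in HE by lia.
  apply Rmult_le_reg_r with (ncomp N m); auto.
  replace (ncomp_rest N (m - j) k / ncomp N m * ncomp N m) with (ncomp_rest N (m - j) k) by (field; lra).
  eapply Rle_trans; [exact H|].
  assert (Hdj : 0 <= dl ^ j) by (apply pow_le; lra).
  replace (exp (INR j) * dl ^ j * exp (- (/ 2 * (INR (nsum k) * dl))) * ncomp N m) with
    (ncomp N m * dl ^ j * (exp (INR j) * exp (- (/ 2 * (INR (nsum k) * dl))))) by ring.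
  apply Rmult_le_compat_l; [apply Rmult_le_pos; lra|].
  rewrite <- exp_plus. eapply Rle_trans; [exact HE|]. apply exp_le.
  assert (HKr : INR j <= INR (nsum k)) by (apply le_INR; lia).
  nra.
Qed.

Lemma nsum_inbox_le a n j k : inbox a n j k -> (nsum k <= (a + n - 1) * j)%nat.
Proof.
  revert k; induction j; intros k Hk.
  - destruct Hk as [Hl _]. destruct k; [simpl; lia|discriminate].
  - destruct k as [|x k]; [destruct Hk as [Hl _]; discriminate|].
    apply inbox_cons in Hk. destruct Hk as [Hx Hk]. simpl. specialize (IHj k Hk). nia.
Qed.

Lemma inbox_widen a n1 n2 j k : (n1 <= n2)%nat -> inbox a n1 j k -> inbox a n2 j k.
Proof.
  intros Hn [Hl Hf]. split; auto. rewrite Forall_forall in *. intros x Hx. specialize (Hf x Hx). lia.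
Qed.

Section Main.
Variable j : nat.
Variable g : list R -> R.
Variables C d : R.
Hypothesis Hj : (0 < j)%nat.
Hypothesis Hg0 : forall x, length x = j -> (forall i, (i < j)%nat -> 0 <= nth i x 0) -> 0 <= g x.
Hypothesis Hint : forall a b : nat -> R, (forall i, (i < j)%nat -> 0 <= a i <= b i) ->
  exists I, box_integral j g a b I.
Hypothesis HC : 0 <= C.
Hypothesis Hd : 0 <= d.
Hypothesis Hgb : forall x, length x = j -> (forall i, (i < j)%nat -> 0 <= nth i x 0) ->
  g x <= C * rpow (lsum x) d.

(* The polynomial growth bound, weakened to g x <= M exp (|x| / 8). *)
Definition growth_const : R := C * (1 + (8 * INR (ndeg d)) ^ ndeg d).

Definition fw (x : list R) : R := g x * exp (- lsum x).

Lemma growth_const_nonneg : 0 <= growth_const.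
Proof.
  unfold growth_const. assert (0 <= (8 * INR (ndeg d)) ^ ndeg d)
    by (apply pow_le; pose proof (pos_INR (ndeg d)); lra).
  apply Rmult_le_pos; lra.
Qed.

Lemma g_exp_growth x : nonneg_pt j x -> g x <= growth_const * exp (lsum x / 8).
Proof.
  intros [Hl Hx]. assert (Hs : 0 <= lsum x) by (apply (lsum_nonneg j); auto).
  eapply Rle_trans; [apply Hgb; auto|]. unfold growth_const. rewrite Rmult_assoc.
  apply Rmult_le_compat_l; auto.
  eapply Rle_trans; [apply rpow_le; auto|]. apply poly_exp; auto.
Qed.

Lemma fw_nonneg x : nonneg_pt j x -> 0 <= fw x.
Proof. intros [Hl Hx]. unfold fw. apply Rmult_le_pos; [apply Hg0; auto|left; apply exp_pos]. Qed.

Lemma fw_decay x : nonneg_pt j x -> fw x <= growth_const * exp (- lsum x / 2).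
Proof.
  intros Hx. pose proof (g_exp_growth x Hx). unfold fw.
  assert (Hs : 0 <= lsum x) by (destruct Hx; apply (lsum_nonneg j); auto).
  apply Rle_trans with (growth_const * exp (lsum x / 8) * exp (- lsum x)).
  - apply Rmult_le_compat_r; [left; apply exp_pos|auto].
  - rewrite Rmult_assoc, <- exp_plus. apply Rmult_le_compat_l; [apply growth_const_nonneg|].
    apply exp_le. lra.
Qed.

(* g e^(-|x|) is integrable on every cube: g satisfies Riemann's criterion there and
   is bounded, and multiplying by exp (-|x|) preserves the criterion. *)
Lemma fw_integrable Rr : 0 < Rr -> exists I, box_integral j fw (fun _ => 0) (fun _ => Rr) I.
Proof.
  intros HR. destruct (Hint (fun _ => 0) (fun _ => Rr) ltac:(intros; lra)) as [Ig HIg].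
  set (B := growth_const * exp (INR j * Rr / 8)).
  assert (HB : 0 <= B)
    by (apply Rmult_le_pos; [apply growth_const_nonneg|left; apply exp_pos]).
  assert (Hbg : forall x, in_cube j Rr x -> 0 <= g x <= B).
  { intros x [Hl Hx]. assert (Hn : nonneg_pt j x) by (split; auto; intros; apply Hx; auto).
    split; [apply Hg0; auto; intros; apply Hx; auto|].
    eapply Rle_trans; [apply g_exp_growth; auto|].
    apply Rmult_le_compat_l; [apply growth_const_nonneg|]. apply exp_le.
    assert (lsum x <= INR j * Rr) by (apply lsum_le; auto; intros; apply Hx; auto). lra. }
  apply (integral_of_osc_vanishes j Rr fw growth_const HR).
  - apply cube_bound; [apply growth_const_nonneg|apply fw_nonneg|apply fw_decay].
  - apply osc_vanishes_mul_exp with B; auto.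
    apply (osc_vanishes_of_integral j Rr g Ig); auto; lra.
Qed.

Definition scaled (dl : R) (k : list nat) : list R := map (fun x => INR x * dl) k.
Definition marg (N m : nat) (k : list nat) : R := ncomp_rest N (m - j) k / ncomp N m.

Lemma marg_nonneg N m k : 0 <= marg N m k.
Proof.
  unfold marg, Rdiv. apply Rmult_le_pos.
  - unfold ncomp_rest. destruct (Nat.leb _ _); [apply ncomp_nonneg|lra].
  - destruct (Req_dec (ncomp N m) 0) as [E|E];
      [rewrite E, Rinv_0; lra|left; apply Rinv_0_lt_compat].
    pose proof (ncomp_nonneg N m). lra.
Qed.

Lemma expectation_as_sum N m s : (0 < m)%nat -> (0 < N)%nat -> valid_indices m j s ->
  comp_expect m N (fun X => g (scaled_point j s (INR N / INR m) X)) =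
  bsum 1 N j (fun k => g (scaled (INR m / INR N) k) * marg N m k).
Proof.
  intros Hm HN Hv.
  assert (0 < INR m) by (apply lt_0_INR; auto). assert (0 < INR N) by (apply lt_0_INR; auto).
  unfold comp_expect.
  rewrite (comp_sum_ext m N _ (fun X => g (scaled (INR m / INR N) (coords s j X)))).
  - rewrite (comp_sum_marginal m N j s (fun k => g (scaled (INR m / INR N) k)) Hv).
    fold (ncomp N m).
    unfold Rdiv at 1. rewrite Rmult_comm, <- bsum_scal. apply bsum_ext; intros k _.
    unfold marg. unfold Rdiv. ring.
  - intros X. unfold scaled, scaled_point, coords. rewrite map_map. f_equal.
    apply map_ext. intros i. field. split; lra.
Qed.

Lemma lattice_range_le R m N : 0 < R -> R <= INR m -> (0 < m)%nat -> (0 < N)%nat ->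
  (fl (R / (INR m / INR N)) <= N)%nat.
Proof.
  intros HR HRm Hm HN.
  assert (Hmr : 0 < INR m) by (apply lt_0_INR; auto).
  assert (HNr : 0 < INR N) by (apply lt_0_INR; auto).
  apply INR_le. destruct (fl_spec (R / (INR m / INR N))) as [HK0 _];
    [apply Rdiv_le_0_compat; [lra|apply Rdiv_lt_0_compat; auto]|].
  eapply Rle_trans; [exact HK0|].
  replace (R / (INR m / INR N)) with (R / INR m * INR N) by (field; lra).
  replace (INR N) with (1 * INR N) at 2 by ring. apply Rmult_le_compat_r; [lra|].
  apply Rmult_le_reg_r with (INR m); auto. field_simplify; lra.
Qed.

(* The regime of the estimates: m/N is small and m is large compared with j, R and
   the relative accuracy eta. *)
Definition regime (R eta : R) (m N : nat) : Prop :=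
  let dl := INR m / INR N in
  (2 * j + 2 <= m <= N)%nat /\ 4 * INR j * R <= INR m /\ INR j * INR j <= INR m /\
  dl <= 1 / 4 /\ INR j * (INR j + 1) * R / INR m + INR j * dl <= eta / 2 /\
  INR j * INR j / INR m + 2 * INR j * R * (INR j * R / INR m + dl) <= eta.

(* The limiting density of the marginal law on the lattice of mesh dl. *)
Definition density (dl : R) (k : list nat) : R := dl ^ j * exp (- (INR (nsum k) * dl)).

Lemma lattice_sum_density dl R :
  bsum 1 (fl (R / dl)) j (fun k => g (scaled dl k) * density dl k) = lattice_sum j fw dl R.
Proof.
  unfold lattice_sum. rewrite bsum_shift, Rmult_comm, <- bsum_scal.
  apply bsum_ext; intros k _. unfold density, fw, scaled, lattice_pt. rewrite map_map.
  rewrite <- (lsum_map dl (map S k)), map_map. ring.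
Qed.

Lemma marg_close R eta m N k : 0 < R -> 0 < eta <= 1 -> regime R eta m N ->
  inbox 1 N j k -> INR (nsum k) * (INR m / INR N) <= INR j * R ->
  Rabs (marg N m k - density (INR m / INR N) k) <= eta * density (INR m / INR N) k.
Proof.
  intros HR Heta (Hm & Hm4 & Hjj & Hd4 & F5 & F6) Hk HKd.
  set (dl := INR m / INR N) in *.
  assert (Hdl : 0 < dl) by (apply Rdiv_lt_0_compat; apply lt_0_INR; lia).
  assert (Hjr : 1 <= INR j) by (replace 1 with (INR 1) by reflexivity; apply le_INR; lia).
  pose proof (local_upper N m j R k ltac:(lia) ltac:(lia) Hk HKd) as PU.
  pose proof (local_lower N m j R k ltac:(lia) ltac:(lia) HR Hk HKd Hm4 Hd4 Hjj) as PL.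
  fold dl (marg N m k) (density dl k) in PU, PL.
  assert (Hq0 : 0 <= density dl k)
    by (unfold density; apply Rmult_le_pos; [apply pow_le; lra|left; apply exp_pos]).
  assert (Hy : exp (INR j * (INR j + 1) * R / INR m + INR j * dl) <= 1 + eta).
  { assert (0 < INR m) by (apply lt_0_INR; lia).
    eapply Rle_trans; [apply exp_le_lin|]; [split; [|lra]|lra].
    assert (0 <= INR j * (INR j + 1) * R / INR m) by (apply Rdiv_le_0_compat; nra). nra. }
  assert (Hup : marg N m k <= density dl k * (1 + eta)).
  { eapply Rle_trans; [exact PU|]. apply Rmult_le_compat_l; auto. }
  assert (Hlo : density dl k * (1 - eta) <= marg N m k).
  { eapply Rle_trans; [|exact PL]. apply Rmult_le_compat_l; auto. lra. }
  apply Rabs_le. nra.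
Qed.

Lemma inner_estimate R eta m N : 0 < R -> 0 < eta <= 1 -> regime R eta m N ->
  let dl := INR m / INR N in
  Rabs (bsum 1 (fl (R / dl)) j (fun k => g (scaled dl k) * marg N m k) - lattice_sum j fw dl R)
    <= eta * lattice_sum j fw dl R.
Proof.
  intros HR Heta Hreg dl.
  pose proof Hreg as (Hm & Hm4 & _).
  assert (Hdl : 0 < dl) by (apply Rdiv_lt_0_compat; apply lt_0_INR; lia).
  assert (Hjr : 1 <= INR j) by (replace 1 with (INR 1) by reflexivity; apply le_INR; lia).
  set (K0 := fl (R / dl)).
  rewrite <- lattice_sum_density, <- bsum_minus, <- bsum_scal.
  eapply Rle_trans; [apply bsum_abs|]. apply bsum_le. intros k Hk. fold K0 in Hk.
  assert (HKd : INR (nsum k) * dl <= INR j * R).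
  { pose proof (nsum_inbox_le _ _ _ _ Hk) as Hns. replace (1 + K0 - 1)%nat with K0 in Hns by lia.
    apply le_INR in Hns. rewrite mult_INR in Hns.
    destruct (fl_spec (R / dl)) as [HK0 _]; [apply Rdiv_le_0_compat; lra|]. fold K0 in HK0.
    assert (INR K0 * dl <= R).
    { apply Rmult_le_compat_r with (r := dl) in HK0; [|lra].
      replace (R / dl * dl) with R in HK0 by (field; lra). lra. }
    apply Rmult_le_compat_r with (r := dl) in Hns; [|lra].
    assert (INR K0 * dl * INR j <= R * INR j) by (apply Rmult_le_compat_r; lra).
    nra. }
  assert (Hk' : inbox 1 N j k).
  { apply (inbox_widen _ K0); auto. apply lattice_range_le; try lia; nra. }
  pose proof (marg_close R eta m N k HR Heta Hreg Hk' HKd) as Hc. fold dl in Hc.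
  assert (HPk : 0 <= g (scaled dl k))
    by (destruct (nonneg_pt_map j dl k ltac:(lra) (proj1 Hk)); apply Hg0; auto).
  replace (g (scaled dl k) * marg N m k - g (scaled dl k) * density dl k)
    with (g (scaled dl k) * (marg N m k - density dl k)) by ring.
  rewrite Rabs_mult, (Rabs_right (g _)) by lra.
  replace (eta * (g (scaled dl k) * density dl k))
    with (g (scaled dl k) * (eta * density dl k)) by ring.
  apply Rmult_le_compat_l; auto.
Qed.

Definition tail_const : R := growth_const * exp (INR j) * 4 ^ j.

(* Beyond |k| dl >= R, g grows at most like exp (|k| dl / 8) while the marginal law
   decays like exp (- |k| dl / 2), leaving e^(-R/8) times a summable density. *)
Lemma tail_term_bound R m N k : (2 * j + 2 <= m <= N)%nat -> inbox 1 N j k ->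
  let dl := INR m / INR N in R <= INR (nsum k) * dl ->
  g (scaled dl k) * marg N m k <=
    growth_const * exp (INR j) * exp (- (R / 8)) * (dl ^ j * exp (- (/ 4 * (INR (nsum k) * dl)))).
Proof.
  intros Hm Hk dl HKR. set (M := growth_const). set (x := INR (nsum k) * dl) in *.
  assert (HM : 0 <= M) by apply growth_const_nonneg.
  assert (Hdl : 0 < dl) by (apply Rdiv_lt_0_compat; apply lt_0_INR; lia).
  assert (Hl : length k = j) by apply Hk.
  pose proof (g_exp_growth _ (nonneg_pt_map j dl k ltac:(lra) Hl)) as HG.
  rewrite lsum_map in HG. fold M x in HG.
  pose proof (local_tail_bound N m j k Hm Hk) as HP. fold dl (marg N m k) x in HP.
  assert (HPk : 0 <= g (scaled dl k))
    by (destruct (nonneg_pt_map j dl k ltac:(lra) Hl); apply Hg0; auto).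
  pose proof (marg_nonneg N m k).
  assert (Hc : 0 <= M * exp (INR j) * dl ^ j)
    by (apply Rmult_le_pos; [apply Rmult_le_pos; [exact HM|left; apply exp_pos]|apply pow_le; lra]).
  apply Rle_trans with ((M * exp (x / 8)) * (exp (INR j) * dl ^ j * exp (- (/ 2 * x)))).
  - apply Rmult_le_compat; auto.
  - replace (M * exp (x / 8) * (exp (INR j) * dl ^ j * exp (- (/ 2 * x))))
      with ((M * exp (INR j) * dl ^ j) * (exp (x / 8) * exp (- (/ 2 * x)))) by ring.
    replace (M * exp (INR j) * exp (- (R / 8)) * (dl ^ j * exp (- (/ 4 * x))))
      with ((M * exp (INR j) * dl ^ j) * (exp (- (R / 8)) * exp (- (/ 4 * x)))) by ring.
    apply Rmult_le_compat_l; auto. rewrite <- !exp_plus. apply exp_le. lra.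
Qed.

Lemma tail_estimate R m N : 0 < R -> (2 * j + 2 <= m <= N)%nat ->
  let dl := INR m / INR N in
  bsum 1 N j (fun k => if innerb (fl (R / dl)) k then 0 else g (scaled dl k) * marg N m k)
    <= tail_const * exp (- (R / 8)).
Proof.
  intros HR Hm dl. set (M := growth_const).
  assert (HM : 0 <= M) by apply growth_const_nonneg.
  assert (Hdl : 0 < dl) by (apply Rdiv_lt_0_compat; apply lt_0_INR; lia).
  assert (Hc : 0 <= M * exp (INR j) * exp (- (R / 8)))
    by (apply Rmult_le_pos; [apply Rmult_le_pos; [exact HM|left; apply exp_pos]|left; apply exp_pos]).
  apply Rle_trans with (bsum 1 N j (fun k => (M * exp (INR j) * exp (- (R / 8))) *
                          (dl ^ j * exp (- (/ 4 * (INR (nsum k) * dl)))))).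
  - apply bsum_le. intros k Hk.
    destruct (innerb (fl (R / dl)) k) eqn:E.
    + apply Rmult_le_pos; auto. apply Rmult_le_pos; [apply pow_le; lra|left; apply exp_pos].
    + apply (tail_term_bound R m N k Hm Hk); cbv zeta; fold dl. apply innerb_false in E.
      assert (INR (fl (R / dl)) + 1 <= INR (nsum k)) by (rewrite <- S_INR; apply le_INR; lia).
      destruct (fl_spec (R / dl)) as [_ HK0']; [apply Rdiv_le_0_compat; lra|].
      replace R with ((R / dl) * dl) by (field; lra). nra.
  - rewrite bsum_scal. pose proof (tail_geo j N (/ 4) dl ltac:(lra) Hdl) as TG.
    replace (1 / / 4) with 4 in TG by field.
    unfold tail_const. fold M.
    replace (M * exp (INR j) * 4 ^ j * exp (- (R / 8)))
      with (M * exp (INR j) * exp (- (R / 8)) * 4 ^ j) by ring.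
    apply Rmult_le_compat_l; auto.
Qed.

Lemma expectation_estimate R eta m N : 0 < R -> 0 < eta <= 1 -> regime R eta m N ->
  let dl := INR m / INR N in
  Rabs (bsum 1 N j (fun k => g (scaled dl k) * marg N m k) - lattice_sum j fw dl R) <=
    eta * lattice_sum j fw dl R + tail_const * exp (- (R / 8)).
Proof.
  intros HR Heta Hreg dl.
  pose proof (inner_estimate R eta m N HR Heta Hreg) as Hin.
  destruct Hreg as (Hm & Hreg).
  pose proof (tail_estimate R m N HR Hm) as Htl. cbv zeta in Hin, Htl. fold dl in Hin, Htl.
  destruct Hreg as (Hm4 & _).
  assert (Hdl : 0 < dl) by (apply Rdiv_lt_0_compat; apply lt_0_INR; lia).
  set (K0 := fl (R / dl)) in *.
  assert (HK0N : (K0 <= N)%nat).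
  { assert (Hjr : 1 <= INR j) by (replace 1 with (INR 1) by reflexivity; apply le_INR; lia).
    apply lattice_range_le; try lia; nra. }
  assert (Htl0 : 0 <= bsum 1 N j (fun k => if innerb K0 k then 0 else g (scaled dl k) * marg N m k)).
  { apply bsum_nonneg. intros k [Hl _]. destruct (innerb K0 k); [lra|].
    apply Rmult_le_pos; [|apply marg_nonneg].
    destruct (nonneg_pt_map j dl k ltac:(lra) Hl); apply Hg0; auto. }
  rewrite <- (bsum_inner N K0) in Hin by auto.
  replace (bsum 1 N j (fun k => g (scaled dl k) * marg N m k)) with
    (bsum 1 N j (fun k => if innerb K0 k then g (scaled dl k) * marg N m k else 0) +
     bsum 1 N j (fun k => if innerb K0 k then 0 else g (scaled dl k) * marg N m k))
    by (rewrite <- bsum_plus; apply bsum_ext; intros; destruct (innerb K0 k); ring).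
  apply Rabs_le_inv in Hin. apply Rabs_le. lra.
Qed.

(* All constraints of the regime hold once 1/m and m/N are below tau, with
   tau regime_const R <= eta. *)
Definition regime_const (Rc : R) : R :=
  let jr := INR j in
  2 * (jr * (jr + 1) * Rc + jr) + (jr * jr + 2 * jr * jr * Rc * Rc + 2 * jr * Rc) +
  4 * jr * Rc + 2 * jr + 6.

Lemma regime_of_small R eta tau m N : 1 <= R -> 0 < eta <= 1 -> 0 < tau ->
  tau * regime_const R <= eta -> 0 < INR m -> 0 < INR N ->
  1 / INR m <= tau -> INR m / INR N <= tau -> regime R eta m N.
Proof.
  intros HR Heta Htau Hconst Hmr HNr Hinvm Hdl.
  unfold regime, regime_const in *; cbv zeta in *.
  set (jr := INR j) in *. set (mr := INR m) in *. set (Nr := INR N) in *.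
  assert (Hjr : 1 <= jr) by (unfold jr; replace 1 with (INR 1) by reflexivity; apply le_INR; lia).
  assert (HjR : 0 <= jr * R) by nra.
  assert (HjjRR : 0 <= jr * jr * R * R) by (repeat apply Rmult_le_pos; lra).
  set (A1 := jr * (jr + 1) * R + jr) in *.
  set (A2 := jr * jr + 2 * jr * jr * R * R + 2 * jr * R) in *.
  assert (HA1 : 0 <= A1) by (unfold A1; nra). assert (HA2 : 0 <= A2) by (unfold A2; nra).
  (* m is at least 1/tau >= regime_const R *)
  assert (HmS : 2 * A1 + A2 + 4 * jr * R + 2 * jr + 6 <= mr).
  { apply Rmult_le_reg_l with tau; auto.
    apply Rmult_le_compat_r with (r := mr) in Hinvm; [|lra].
    replace (1 / mr * mr) with 1 in Hinvm by (field; lra). lra. }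
  assert (0 <= mr / Nr) by (apply Rdiv_le_0_compat; lra).
  repeat split.
  - apply INR_le. rewrite plus_INR, mult_INR. fold jr mr. simpl. lra.
  - apply INR_le. fold mr Nr. assert (mr / Nr < 1) by nra.
    replace mr with (mr / Nr * Nr) by (field; lra). nra.
  - lra.
  - unfold A2 in HmS. nra.
  - nra.
  - replace (jr * (jr + 1) * R / mr + jr * (mr / Nr)) with
      (jr * (jr + 1) * R * (1 / mr) + jr * (mr / Nr)) by (field; lra).
    assert (jr * (jr + 1) * R * (1 / mr) <= jr * (jr + 1) * R * tau)
      by (apply Rmult_le_compat_l; auto; nra).
    assert (jr * (mr / Nr) <= jr * tau) by (apply Rmult_le_compat_l; lra).
    unfold A1 in *. nra.
  - replace (jr * jr / mr + 2 * jr * R * (jr * R / mr + mr / Nr)) with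
      ((jr * jr + 2 * jr * jr * R * R) * (1 / mr) + 2 * jr * R * (mr / Nr)) by (field; lra).
    assert ((jr * jr + 2 * jr * jr * R * R) * (1 / mr) <= (jr * jr + 2 * jr * jr * R * R) * tau)
      by (apply Rmult_le_compat_l; auto; nra).
    assert (2 * jr * R * (mr / Nr) <= 2 * jr * R * tau) by (apply Rmult_le_compat_l; lra).
    unfold A2 in *. nra.
Qed.

Lemma regime_eventually R eta dl0 : 1 <= R -> 0 < eta <= 1 -> 0 < dl0 ->
  exists S, 0 < S /\ forall m N : nat, S < INR m -> INR m * S < INR N ->
    regime R eta m N /\ INR m / INR N <= dl0.
Proof.
  intros HR Heta Hdl0.
  assert (Hc : 0 <= regime_const R).
  { unfold regime_const; cbv zeta. pose proof (pos_INR j).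
    assert (0 <= INR j * R) by nra. assert (0 <= INR j * INR j * R * R) by nra. nra. }
  assert (Hinv : 0 < 1 / dl0) by (apply Rdiv_lt_0_compat; lra).
  set (S := (regime_const R + 1 / dl0) / eta).
  assert (HS : 0 < S) by (apply Rdiv_lt_0_compat; lra).
  exists S. split; auto. intros m N Hm HmN.
  set (tau := 1 / S).
  assert (Htau : 0 < tau) by (apply Rdiv_lt_0_compat; lra).
  assert (HtS : tau * (regime_const R + 1 / dl0) = eta).
  { unfold tau, S. set (c := regime_const R + 1 / dl0). field. split; unfold c; lra. }
  assert (Hmr : 0 < INR m) by lra.
  assert (HNr : 0 < INR N) by (assert (0 < INR m * S) by (apply Rmult_lt_0_compat; lra); lra).
  assert (Hinvm : 1 / INR m <= tau).
  { apply Rmult_le_reg_r with (INR m); auto. replace (1 / INR m * INR m) with 1 by (field; lra).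
    unfold tau. replace (1 / S * INR m) with (INR m / S) by (field; lra).
    apply Rmult_le_reg_r with S; auto. replace (INR m / S * S) with (INR m) by (field; lra). lra. }
  assert (Hdl : INR m / INR N <= tau).
  { apply Rmult_le_reg_r with (INR N); auto. replace (INR m / INR N * INR N) with (INR m) by (field; lra).
    unfold tau. apply Rmult_le_reg_r with S; auto.
    replace (1 / S * INR N * S) with (INR N) by (field; lra). lra. }
  split.
  - apply regime_of_small with tau; auto. nra.
  - apply Rle_trans with tau; auto. apply Rmult_le_reg_l with (1 / dl0); auto.
    replace (1 / dl0 * dl0) with 1 by (field; lra). nra.
Qed.

Section Approximation.
Variable L : R.
Hypothesis Hup : forall Rr I, 0 < Rr -> box_integral j fw (fun _ => 0) (fun _ => Rr) I -> I <= L.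
Hypothesis Hlow : forall eps, 0 < eps -> exists R0, 0 < R0 /\ forall Rr I, R0 <= Rr ->
  box_integral j fw (fun _ => 0) (fun _ => Rr) I -> L - eps < I.

Lemma choose_cube eps : 0 < eps -> exists R I, 1 <= R /\
  box_integral j fw (fun _ => 0) (fun _ => R) I /\ L - eps / 5 < I <= L /\
  tail_const * exp (- (R / 8)) <= eps / 5.
Proof.
  intros Heps. destruct (Hlow (eps / 5) ltac:(lra)) as [R0 [HR0 HR0']].
  assert (HTC : 0 <= tail_const).
  { unfold tail_const. apply Rmult_le_pos; [apply Rmult_le_pos; [apply growth_const_nonneg|
      left; apply exp_pos]|apply pow_le; lra]. }
  set (R := Rmax R0 (Rmax 1 (40 * tail_const / eps))).
  assert (HR1 : 1 <= R) by (unfold R; eapply Rle_trans; [|apply Rmax_r]; apply Rmax_l).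
  assert (HRR0 : R0 <= R) by (unfold R; apply Rmax_l).
  assert (HRT : 40 * tail_const <= R * eps).
  { assert (40 * tail_const / eps <= R) by (unfold R; eapply Rle_trans; [|apply Rmax_r]; apply Rmax_r).
    apply Rmult_le_compat_r with (r := eps) in H; [|lra].
    replace (40 * tail_const / eps * eps) with (40 * tail_const) in H by (field; lra). lra. }
  destruct (fw_integrable R ltac:(lra)) as [I HI].
  exists R, I. repeat split; auto; [apply (HR0' R I); auto|apply (Hup R I); auto; lra|].
  pose proof (exp_neg_le_inv (R / 8) ltac:(lra)).
  apply Rle_trans with (tail_const * (1 / (R / 8))); [apply Rmult_le_compat_l; auto|].
  replace (tail_const * (1 / (R / 8))) with (8 * tail_const / R) by (field; lra).
  apply Rmult_le_reg_r with R; [lra|]. replace (8 * tail_const / R * R) with (8 * tail_const)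
    by (field; lra). lra.
Qed.

Lemma uniform_approximation eps : 0 < eps -> exists S, 0 < S /\
  forall N m s, S < INR m -> INR m * S < INR N -> valid_indices m j s ->
    Rabs (comp_expect m N (fun X => g (scaled_point j s (INR N / INR m) X)) - L) < eps.
Proof.
  intros Heps. destruct (choose_cube eps Heps) as [R [I [HR1 [HI [HIL Htail]]]]].
  set (M := growth_const). assert (HM : 0 <= M) by apply growth_const_nonneg.
  assert (Hcube := cube_bound j fw M HM fw_nonneg fw_decay R).
  destruct (lattice_sum_converges j R fw M I ltac:(lra) Hcube HI (eps / 5) ltac:(lra))
    as [dl0 [Hdl0 Hlat]].
  assert (HM2 : 0 <= M * 2 ^ j) by (apply Rmult_le_pos; auto; apply pow_le; lra).
  set (eta := Rmin 1 (eps / (5 * (M * 2 ^ j + 1)))).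
  assert (Heta : 0 < eta <= 1)
    by (split; [apply Rmin_glb_lt; [lra|apply Rdiv_lt_0_compat; lra]|apply Rmin_l]).
  assert (HetaM : eta * (M * 2 ^ j) < eps / 5).
  { apply Rle_lt_trans with ((eps / (5 * (M * 2 ^ j + 1))) * (M * 2 ^ j)).
    - apply Rmult_le_compat_r; auto. apply Rmin_r.
    - apply Rmult_lt_reg_r with (5 * (M * 2 ^ j + 1)); [lra|]. field_simplify; try lra; nra. }
  destruct (regime_eventually R eta dl0 HR1 Heta Hdl0) as [S [HS Hreg]].
  exists S. split; auto. intros N m s HmS HNS Hv.
  destruct (Hreg m N HmS HNS) as [Hrg Hdl].
  assert (Hm : (2 * j + 2 <= m <= N)%nat) by apply Hrg.
  assert (Hdl' : 0 < INR m / INR N) by (apply Rdiv_lt_0_compat; apply lt_0_INR; lia).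
  rewrite expectation_as_sum by (auto; lia).
  pose proof (expectation_estimate R eta m N ltac:(lra) Heta Hrg) as E. cbv zeta in E.
  specialize (Hlat (INR m / INR N) (conj Hdl' Hdl)).
  set (Lam := lattice_sum j fw (INR m / INR N) R) in *.
  assert (HLam : 0 <= Lam <= M * 2 ^ j).
  { split.
    - unfold Lam, lattice_sum. apply Rmult_le_pos; [|apply pow_le; lra].
      apply bsum_nonneg. intros k [Hl _]. apply fw_nonneg, lattice_pt_nonneg; auto; lra.
    - apply lattice_sum_bound; auto; [apply fw_decay|lra]. }
  assert (eta * Lam <= eta * (M * 2 ^ j)) by (apply Rmult_le_compat_l; lra).
  apply Rabs_le_inv in E, Hlat. apply Rabs_def1; lra.
Qed.
End Approximation.
End Main.

Theorem mainTheorem2 (j : nat) (g : list R -> R) (C d : R) :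
  (0 < j)%nat ->
  (forall x, length x = j -> (forall i, (i < j)%nat -> 0 <= nth i x 0) -> 0 <= g x) ->
  (forall a b : nat -> R, (forall i, (i < j)%nat -> 0 <= a i <= b i) ->
     exists I, box_integral j g a b I) ->
  0 <= C -> 0 <= d ->
  (forall x, length x = j -> (forall i, (i < j)%nat -> 0 <= nth i x 0) ->
     g x <= C * rpow (lsum x) d) ->
  exists L : R,
    improper_integral j (fun x => g x * exp (- lsum x)) L /\
    forall omega : nat -> R,
      (forall M, exists N0 : nat, forall N, (N0 <= N)%nat -> M <= omega N) ->
      forall eps, 0 < eps -> exists N0 : nat, forall N m : nat, (N0 <= N)%nat ->
        omega N < INR m < INR N / omega N ->
        forall s : nat -> nat,
          (forall i, (i < j)%nat -> (s i < m)%nat) ->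
          (forall i i', (i < j)%nat -> (i' < j)%nat -> s i = s i' -> i = i') ->
          Rabs (comp_expect m N
                  (fun X => g (scaled_point j s (INR N / INR m) X)) - L) < eps.
Proof.
  intros Hj Hg0 Hint HC Hd Hgb.
  destruct (improper_integral_exists j (fw g) (growth_const C d) (growth_const_nonneg C d HC)
              (fw_nonneg j g Hg0) (fw_decay j g C d HC Hd Hgb)
              (fw_integrable j g C d Hg0 Hint HC Hd Hgb)) as [L [Himp [Hup Hlow]]].
  exists L. split; [exact Himp|].
  intros omega Hom eps Heps.
  destruct (uniform_approximation j g C d Hj Hg0 Hint HC Hd Hgb L Hup Hlow eps Heps)
    as [S [HS Happrox]].
  (* omega N >= S makes m > S and m S < N in the range omega N < m < N / omega N *)
  destruct (Hom S) as [N0 HN0]. exists N0.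
  intros N m HN [Hm1 Hm2] s Hs Hinj. specialize (HN0 N HN).
  assert (Hom0 : 0 < omega N) by lra.
  apply Happrox; [lra| |split; auto].
  apply Rmult_lt_compat_r with (r := omega N) in Hm2; auto.
  replace (INR N / omega N * omega N) with (INR N) in Hm2 by (field; lra).
  pose proof (pos_INR m). nra.
Qed.
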